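(* Let $(\Sigma,\partial\Sigma)$ be a weighted metric graph with boundary, let $\Gamma$ be an additive subgroup of $\mathbb R$ containing the lengths of all edges of $\Sigma$, let $p,q\in\{0,1\}$, let $\omega\in\mathcal A^{p,q}(\Sigma,\partial\Sigma)$ and $x\in\Sigma$. Then there exist a neighbourhood $U\subset\Sigma$ of $x$ which is a subgraph with $\bar\Gamma$-rational vertices, a $(\mathbb Z,\Gamma)$-harmonic tropicalization $h\colon U\to\mathbb R^n$ of $(U,\partial U)$, and a smooth Lagerberg form $\eta\in\mathcal A^{p,q}(\mathbb R^n)$ such that $h^*\eta=\omega|_U$. Moreover, if $x$ is not a vertex of valency $1$ lying outside $\partial\Sigma$, then $U$ and $h$ can be chosen independently of $\omega$.
   Context: Weighted metric graph with boundary $(\Sigma,\partial\Sigma)$: finite multigraph without loop edges, oriented edges $e$ with tail $e^-$, head $e^+$, length $\ell(e)>0$, parametrization $t_e\colon[0,\ell(e)]\to e$ ($t_e(0)=e^-$, $t_{\bar e}(x)=t_e(\ell(e)-x)$), weight $w(e)=w(\bar e)\in\mathbb Z_{>0}$, boundary $\partial\Sigma\subset V(\Sigma)$; subdivisions are allowed freely. Smooth forms $\mathcal A^{p,q}(\Sigma,\partial\Sigma)$: as usual, $\mathcal A^{0,0}$ = continuous functions smooth on edges with, at interior vertices $v$: constant near $v$ if valency 1; $w(e_1)^nf^{(n)}_{e_1}(v)=(-1)^nw(e_2)^nf^{(n)}_{e_2}(v)$ for all $n$ if valency 2 (derivatives w.r.t. $t_{e_i}$); $\sum_{e^-=v}w(e)\frac{df}{dt_e}(v)=0$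 if valency $\ge3$. $\mathcal A^{1,0}$, $\mathcal A^{0,1}$: $(f_e\,d't_e)$, $(f_e\,d''t_e)$ with $f_{\bar e}=-f_e$, vanishing near interior valency-1 vertices, $(w(e_1)f_{e_1},-w(e_2)f_{e_2})$ satisfying the valency-2 condition above, $\sum_{e^-=v}w(e)f_e(v)=0$ at interior valency $\ge3$. $\mathcal A^{1,1}$: $(f_e\,d't_ed''t_e)$, $f_{\bar e}=f_e$, vanishing near interior valency-1 vertices, $(w(e_1)^2f_{e_1},w(e_2)^2f_{e_2})$ satisfying the valency-2 condition. $\bar\Gamma$ is the saturation $\{x\in\mathbb R:nx\in\Gamma\text{ for some }n\ge1\}$ if $\Gamma$ is discrete, and $\bar\Gamma=\Gamma$ otherwise; a point is $\bar\Gamma$-rational if it is $t_e(y)$ with $y\in\bar\Gamma$. A subgraph $U$ is a union of vertices and closed edges of a subdivision, with the induced weighted metric structure and boundary $\partial U=(U\cap\partial\Sigma)\cup$ (relative boundary of $U$ in $\Sigma$); $\omega|_U$ is the restriction of the edge functions. A harmonic function on $(U,\partial U)$ is a smooth function whose restriction to each edge is affine ($f\circ t_e(x)=ax+b$, slope $a$). It is $(\mathbb Z,\Gamma)$-harmonic if all slopes are integers and, for each edge $e\subset U$ contained in the edge $e'$ of $\Sigma$, the affine extension of $f|_e$ to $e'$ takes values in $\Gamma$ at the endpoints of $e'$. A $(\mathbb Z,\Gamma)$-harmonic tropicalization is $h=(h_1,\dots,h_n)$ with all $h_i$ $(\mathbb Z,\Gamma)$-harmonic. Lagerberg forms on $\mathbb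 R^n$: $\sum g_{IJ}\,d'x_I\wedge d''x_J$ with smooth $g_{IJ}$. Pullback: $h^*g=g\circ h$; $h^*\sum_ig_i\,d'x_i=(\sum_i\frac{dh_i}{dt_e}\,g_i\circ h\;d't_e)$, similarly for $d''$; $h^*\sum_{i,j}g_{ij}\,d'x_i\wedge d''x_j=(\sum_{i,j}\frac{dh_i}{dt_e}\frac{dh_j}{dt_e}\,g_{ij}\circ h\;d't_ed''t_e)$. *)

From Stdlib Require Import Reals List Arith ZArith.
From Coquelicot Require Import Coquelicot.
Import ListNotations.
Open Scope R_scope.

(** * Weighted metric graphs with boundary
   Vertices are 0..g_nV-1, edges are 0..g_nE-1; each edge e is stored with a
   fixed orientation e^- = g_src e, e^+ = g_tgt e; the reversed edge is
   handled explicitly.  t_e(y), y in [0, g_len e], is the point of e. *)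
Record wgraph := {
  g_nV : nat; g_nE : nat;
  g_src : nat -> nat; g_tgt : nat -> nat;
  g_len : nat -> R; g_wt : nat -> nat;
  g_bnd : nat -> Prop }.

Definition wf_graph (G : wgraph) : Prop :=
  forall e, (e < g_nE G)%nat ->
    (g_src G e < g_nV G)%nat /\ (g_tgt G e < g_nV G)%nat /\
    g_src G e <> g_tgt G e /\ 0 < g_len G e /\ (0 < g_wt G e)%nat.

Inductive point := PV (v : nat) | PE (e : nat) (y : R).

Definition valid_pt (G : wgraph) (P : point) : Prop :=
  match P with
  | PV v => (v < g_nV G)%nat
  | PE e y => (e < g_nE G)%nat /\ 0 < y < g_len G e
  end.

Definition tpt (G : wgraph) (e : nat) (y : R) : point :=
  if Req_EM_T y 0 then PV (g_src G e)
  else if Req_EM_T y (g_len G e) then PV (g_tgt G e) else PE e y.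

Definition near (G : wgraph) (P : point) (e : nat) (y eps : R) : Prop :=
  match P with
  | PV v => (g_src G e = v /\ y < eps) \/ (g_tgt G e = v /\ g_len G e - y < eps)
  | PE e0 x => e = e0 /\ Rabs (y - x) < eps
  end.

Definition nbhd (G : wgraph) (S : point -> Prop) (P : point) : Prop :=
  S P /\ exists eps, 0 < eps /\
    forall e y, (e < g_nE G)%nat -> 0 <= y <= g_len G e ->
      near G P e y eps -> S (tpt G e y).

(** incident edges and valency (no loops, so each incident edge counts once) *)
Definition incident (G : wgraph) (v : nat) : list nat :=
  filter (fun e => orb (Nat.eqb (g_src G e) v) (Nat.eqb (g_tgt G e) v))
         (seq 0 (g_nE G)).

Definition valency (G : wgraph) (v : nat) : nat := length (incident G v).

Definition Rsum (l : list R) : R := fold_right Rplus 0 l.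

(** * Smooth forms on (G, bnd G)
   A form of bidegree (p,q) (p,q booleans = 0/1) is given by edge functions
   f e : R -> R, where f e y is the coefficient at t_e(y) w.r.t. d't_e, d''t_e
   for the stored orientation of e.  Each f e is required to be C^oo on R
   (only its values on [0, g_len e] matter: a smooth function on the closed
   edge, together with a smooth extension). *)
Definition smooth_fun (f : R -> R) : Prop := forall n x, ex_derive_n f n x.

Definition rev_sign (p q : bool) : R := if xorb p q then -1 else 1.

(** coefficient on e oriented outward at v (e^- = v), as a function of the
    parameter of the outward orientation *)
Definition outf (G : wgraph) (p q : bool) (f : nat -> R -> R) (v e : nat)
  : R -> R :=
  if Nat.eqb (g_src G e) v then f e
  else fun y => rev_sign p q * f e (g_len G e - y).

Definition val2_cond (w1 w2 : R) (F1 F2 : R -> R) : Prop :=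
  forall n : nat,
    w1 ^ n * Derive_n F1 n 0 = (-1) ^ n * w2 ^ n * Derive_n F2 n 0.

Definition is_form (G : wgraph) (p q : bool) (f : nat -> R -> R) : Prop :=
  (forall e, (e < g_nE G)%nat -> smooth_fun (f e)) /\
  forall v, (v < g_nV G)%nat ->
    let o := outf G p q f v in
    let w e := INR (g_wt G e) in
    (* continuity, for functions *)
    (andb (negb p) (negb q) = true ->
       forall e1 e2, In e1 (incident G v) -> In e2 (incident G v) ->
         o e1 0 = o e2 0) /\
    (~ g_bnd G v ->
      (valency G v = 1%nat ->
         forall e, In e (incident G v) ->
           exists eps, 0 < eps /\ forall y, 0 <= y <= eps ->
             o e y = (if orb p q then 0 else o e 0)) /\
      (valency G v = 2%nat ->
         forall e1 e2, In e1 (incident G v) -> In e2 (incident G v) ->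
           e1 <> e2 ->
           match p, q with
           | false, false => val2_cond (w e1) (w e2) (o e1) (o e2)
           | true, true =>
               val2_cond (w e1) (w e2) (fun y => w e1 ^ 2 * o e1 y)
                                       (fun y => w e2 ^ 2 * o e2 y)
           | _, _ =>
               val2_cond (w e1) (w e2) (fun y => w e1 * o e1 y)
                                       (fun y => - (w e2 * o e2 y))
           end) /\
      ((3 <= valency G v)%nat ->
           match p, q with
           | false, false =>
               Rsum (map (fun e => w e * Derive (o e) 0) (incident G v)) = 0
           | true, true => True
           | _, _ => Rsum (map (fun e => w e * o e 0) (incident G v)) = 0
           end)).

Definition subgroup (Gam : R -> Prop) : Prop :=
  Gam 0 /\ forall a b, Gam a -> Gam b -> Gam (a - b).

Definition discrete (Gam : R -> Prop) : Prop :=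
  exists eps, 0 < eps /\ forall g, Gam g -> g <> 0 -> eps <= Rabs g.

Definition Gbar (Gam : R -> Prop) (y : R) : Prop :=
  (discrete Gam /\ exists n : nat, (1 <= n)%nat /\ Gam (INR n * y)) \/
  (~ discrete Gam /\ Gam y).

Definition rational_pt (G : wgraph) (Gam : R -> Prop) (P : point) : Prop :=
  (exists v, P = PV v) \/
  exists e y, (e < g_nE G)%nat /\ 0 <= y <= g_len G e /\ Gbar Gam y /\
              P = tpt G e y.

(** * Subgraphs (of a subdivision)
   A subgraph U is a weighted metric graph [sg] with: each vertex u mapped to
   a point [vpt u] of G; each edge e' of U being the segment
   t_{par e'}([off e', off e' + len e']) of the edge par e' of G, oriented as
   par e' and with t_{e'}(y) = t_{par e'}(off e' + y). *)
Record subgraph := {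
  sg : wgraph;
  sg_par : nat -> nat;
  sg_off : nat -> R;
  sg_vpt : nat -> point }.

Definition in_sub (G : wgraph) (U : subgraph) (P : point) : Prop :=
  (exists u, (u < g_nV (sg U))%nat /\ sg_vpt U u = P) \/
  (exists e y, (e < g_nE (sg U))%nat /\ 0 <= y <= g_len (sg U) e /\
               P = tpt G (sg_par U e) (sg_off U e + y)).

Definition sub_bnd (G : wgraph) (U : subgraph) (u : nat) : Prop :=
  (exists v, sg_vpt U u = PV v /\ g_bnd G v) \/
  ~ nbhd G (in_sub G U) (sg_vpt U u).

Definition is_subgraph (G : wgraph) (U : subgraph) : Prop :=
  let H := sg U in
  wf_graph H /\
  (forall u, (u < g_nV H)%nat -> valid_pt G (sg_vpt U u)) /\
  (forall u1 u2, (u1 < g_nV H)%nat -> (u2 < g_nV H)%nat ->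
     sg_vpt U u1 = sg_vpt U u2 -> u1 = u2) /\
  (forall e, (e < g_nE H)%nat ->
     (sg_par U e < g_nE G)%nat /\ 0 <= sg_off U e /\
     sg_off U e + g_len H e <= g_len G (sg_par U e) /\
     g_wt H e = g_wt G (sg_par U e) /\
     sg_vpt U (g_src H e) = tpt G (sg_par U e) (sg_off U e) /\
     sg_vpt U (g_tgt H e) = tpt G (sg_par U e) (sg_off U e + g_len H e)) /\
  (forall e1 e2, (e1 < g_nE H)%nat -> (e2 < g_nE H)%nat -> e1 <> e2 ->
     sg_par U e1 = sg_par U e2 ->
     sg_off U e1 + g_len H e1 <= sg_off U e2 \/
     sg_off U e2 + g_len H e2 <= sg_off U e1) /\
  (forall u e, (u < g_nV H)%nat -> (e < g_nE H)%nat ->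
     forall y, 0 < y < g_len H e ->
       sg_vpt U u <> tpt G (sg_par U e) (sg_off U e + y)) /\
  (forall u, (u < g_nV H)%nat -> (g_bnd H u <-> sub_bnd G U u)).

(** * (Z,Gamma)-harmonic tropicalizations of (U, bnd U)
   h i e y = value of the i-th component on t_e(y), e an edge of U. *)
Definition harmonic (H : wgraph) (f : nat -> R -> R) : Prop :=
  is_form H false false f /\
  forall e, (e < g_nE H)%nat ->
    exists s c, forall y, 0 <= y <= g_len H e -> f e y = s * y + c.

Definition ZGam_harmonic (G : wgraph) (Gam : R -> Prop) (U : subgraph)
  (f : nat -> R -> R) : Prop :=
  harmonic (sg U) f /\
  forall e, (e < g_nE (sg U))%nat ->
    exists (s : Z) (c : R),
      (forall y, 0 <= y <= g_len (sg U) e -> f e y = IZR s * y + c) /\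
      (* affine extension to the edge sg_par e of G, at its endpoints *)
      Gam (c - IZR s * sg_off U e) /\
      Gam (c + IZR s * (g_len G (sg_par U e) - sg_off U e)).

Definition ZGam_trop (G : wgraph) (Gam : R -> Prop) (U : subgraph)
  (n : nat) (h : nat -> nat -> R -> R) : Prop :=
  forall i, (i < n)%nat -> ZGam_harmonic G Gam U (h i).

(** * Lagerberg forms on R^n
   Points of R^n are functions nat -> R, only coordinates < n mattering. *)
Definition upd (x : nat -> R) (i : nat) (t : R) : nat -> R :=
  fun k => if Nat.eqb k i then t else x k.

Definition partial (i : nat) (F : (nat -> R) -> R) : (nat -> R) -> R :=
  fun x => Derive (fun t => F (upd x i t)) (x i).

Definition iter_partial (l : list nat) (F : (nat -> R) -> R) :=
  fold_right partial F l.

Definition cont_Rn (n : nat) (F : (nat -> R) -> R) : Prop :=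
  forall x eps, 0 < eps -> exists delta, 0 < delta /\
    forall y, (forall i, (i < n)%nat -> Rabs (y i - x i) < delta) ->
      Rabs (F y - F x) < eps.

Definition smooth_Rn (n : nat) (F : (nat -> R) -> R) : Prop :=
  (forall x y, (forall i, (i < n)%nat -> x i = y i) -> F x = F y) /\
  forall l, List.Forall (fun i => (i < n)%nat) l ->
    cont_Rn n (iter_partial l F) /\
    forall i x, (i < n)%nat ->
      ex_derive (fun t => iter_partial l F (upd x i t)) (x i).

(** indices: for degree 0 only the dummy index 0, for degree 1 i < n *)
Definition idx (b : bool) (n : nat) : list nat := if b then seq 0 n else [0%nat].

(** eta = sum_{I,J} g I J d'x_I /\ d''x_J, coefficient g i j *)
Definition lagerberg (n : nat) (p q : bool)
  (g : nat -> nat -> (nat -> R) -> R) : Prop :=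
  forall i j, In i (idx p n) -> In j (idx q n) -> smooth_Rn n (g i j).

Definition pullback (n : nat) (p q : bool) (g : nat -> nat -> (nat -> R) -> R)
  (h : nat -> nat -> R -> R) (e : nat) (y : R) : R :=
  Rsum (map (fun i => Rsum (map (fun j =>
     (if p then Derive (h i e) y else 1) *
     (if q then Derive (h j e) y else 1) *
     g i j (fun k => h k e y)) (idx q n))) (idx p n)).

Definition pullback_eq (G : wgraph) (U : subgraph) (n : nat) (p q : bool)
  (g : nat -> nat -> (nat -> R) -> R) (h : nat -> nat -> R -> R)
  (omega : nat -> R -> R) : Prop :=
  forall e y, (e < g_nE (sg U))%nat -> 0 <= y <= g_len (sg U) e ->
    pullback n p q g h e y = omega (sg_par U e) (sg_off U e + y).

Definition good_chart (G : wgraph) (Gam : R -> Prop) (x : point)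
  (U : subgraph) (n : nat) (h : nat -> nat -> R -> R) : Prop :=
  is_subgraph G U /\ nbhd G (in_sub G U) x /\
  (forall u, (u < g_nV (sg U))%nat -> rational_pt G Gam (sg_vpt U u)) /\
  ZGam_trop G Gam U n h.

Definition interior_leaf (G : wgraph) (x : point) : Prop :=
  exists v, x = PV v /\ ~ g_bnd G v /\ valency G v = 1%nat.

From Stdlib Require Import Reals List Arith ZArith Lia Lra.
From Coquelicot Require Import Coquelicot.
From Stdlib Require Import Classical FunctionalExtensionality ClassicalEpsilon.
Import ListNotations.
Open Scope R_scope.

(** Near any point [x] we use a star-shaped chart: a short segment of the edge if [x] is
    interior to an edge, otherwise initial segments of all edges at the vertex [x], with
    endpoints in [Gbar Gam], which is dense since it contains the positive edge lengths.
    A (Z,Gam)-harmonic map on a star is given by integer slopes along the branches, balanced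
    when the centre is interior, and [eta] is assembled from one-variable functions so that
    [h^* eta] reproduces [omega] on every branch:
    - at a boundary vertex there is one coordinate per branch and [eta] copies [omega];
    - at a bivalent vertex one coordinate has slopes [w_1] and [-w_0]; the valency-2
      condition says exactly that the two branches of [omega] have the same Taylor series at
      the vertex, so they glue into one smooth function of that coordinate;
    - at a vertex of valency [k >= 3] we use [k - 1] coordinates, the first [k - 1] branches
      along the axes and the last one along [-(w_0, ..., w_(k-2))]; the axes determine the
      diagonal part of [eta], and the error on the last branch is absorbed by a cross term
      in the first two coordinates, which is smooth thanks to the balancing condition on
      [omega] (for functions through Hadamard's lemma).
    At an interior leaf [omega] is constant near [x], and a 0-dimensional chart inside the
    region of constancy works; this is the only case where the chart depends on [omega]. *)

Lemma Rsum_ext {A} (f g : A -> R) l : (forall x, In x l -> f x = g x) -> Rsum (map f l) = Rsum (map g l).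
Proof. induction l; simpl; intros H; auto. rewrite H, IHl; auto. Qed.

Lemma Rsum_scal {A} (f : A -> R) c l : Rsum (map (fun x => c * f x) l) = c * Rsum (map f l).
Proof. induction l; simpl; [ring|]. rewrite IHl; ring. Qed.

Lemma Rsum_plus {A} (f g : A -> R) l : Rsum (map (fun x => f x + g x) l) = Rsum (map f l) + Rsum (map g l).
Proof. induction l; simpl; [ring|]. rewrite IHl; ring. Qed.

Lemma Rsum_zero {A} (f : A -> R) l : (forall x, In x l -> f x = 0) -> Rsum (map f l) = 0.
Proof. induction l; simpl; intros H; auto. rewrite H, IHl; auto. ring. Qed.

Lemma Rsum_app l1 l2 : Rsum (l1 ++ l2) = Rsum l1 + Rsum l2.
Proof. induction l1; simpl; [ring|]. rewrite IHl1; ring. Qed.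

Lemma Rsum_seq_single (f : nat -> R) s n i : (s <= i < s + n)%nat ->
  (forall m, (s <= m < s + n)%nat -> m <> i -> f m = 0) -> Rsum (map f (seq s n)) = f i.
Proof.
  revert s. induction n; intros s Hi H; [lia|]. simpl.
  destruct (Nat.eq_dec s i) as [->|Hs].
  - rewrite Rsum_zero. ring. intros m Hm.
    apply in_seq in Hm. apply H; lia.
  - rewrite H by lia. rewrite IHn; [ring|lia|]. intros; apply H; lia.
Qed.

Lemma map_nth_seq {A B} (f : A -> B) (l : list A) d :
  map f l = map (fun j => f (nth j l d)) (seq 0 (length l)).
Proof.
  induction l; simpl; auto. f_equal. rewrite IHl. rewrite <- seq_shift, map_map. auto.
Qed.

Lemma Rsum_seq_S (f : nat -> R) n : Rsum (map f (seq 0 (S n))) = Rsum (map f (seq 0 n)) + f n.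
Proof. rewrite seq_S, map_app, Rsum_app. simpl. ring. Qed.

(** * Smooth functions of one variable *)

Definition derive_chain (F : nat -> R -> R) : Prop :=
  forall n x, is_derive (F n) x (F (S n) x).

Lemma Derive_n_derive_chain F : derive_chain F -> forall n x, Derive_n (F 0%nat) n x = F n x.
Proof.
  intros H n; induction n as [|n IH]; intros x; simpl; [reflexivity|].
  rewrite (Derive_ext _ (F n)) by exact IH. apply is_derive_unique, H.
Qed.

Lemma smooth_derive_chain F : derive_chain F -> smooth_fun (F 0%nat).
Proof.
  intros H [|n] x; simpl; [trivial|].
  apply ex_derive_ext with (F n); [intros t; symmetry; apply Derive_n_derive_chain, H|].
  eexists; apply H.
Qed.

Lemma derive_chain_Derive_n f : smooth_fun f -> derive_chain (Derive_n f).
Proof. intros H n x. apply Derive_correct, (H (S n) x). Qed.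

Lemma smooth_ext f g : (forall x, f x = g x) -> smooth_fun f -> smooth_fun g.
Proof. intros E H n x. apply ex_derive_n_ext with f; auto. Qed.

Lemma smooth_of_derive_chain F f : derive_chain F -> (forall x, F 0%nat x = f x) -> smooth_fun f.
Proof. intros H E; apply smooth_ext with (F 0%nat); [exact E|apply smooth_derive_chain, H]. Qed.

Lemma smooth_Derive_n f n : smooth_fun f -> smooth_fun (Derive_n f n).
Proof.
  intros Hf. apply (smooth_of_derive_chain (fun m => Derive_n f (n + m))).
  - intros m x. rewrite <- plus_n_Sm. apply derive_chain_Derive_n, Hf.
  - intros x. rewrite Nat.add_0_r. reflexivity.
Qed.

Lemma smooth_Derive f : smooth_fun f -> smooth_fun (Derive f).
Proof. apply (smooth_Derive_n f 1). Qed.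

Lemma is_derive_smooth f x : smooth_fun f -> is_derive f x (Derive f x).
Proof. intros H; apply Derive_correct, (H 1%nat x). Qed.

Lemma continuous_smooth f x : smooth_fun f -> continuous f x.
Proof. intros H; apply (ex_derive_continuous (K:=R_AbsRing) (V:=R_NormedModule)), (H 1%nat x). Qed.

Lemma continuity_pt_smooth f x : smooth_fun f -> continuity_pt f x.
Proof. intros H; apply continuity_pt_filterlim, continuous_smooth, H. Qed.

Lemma smooth_const c : smooth_fun (fun _ => c).
Proof.
  apply (smooth_of_derive_chain (fun n _ => match n with O => c | _ => 0 end)); [|reflexivity].
  intros [|n] x; apply (is_derive_const (K:=R_AbsRing) (V:=R_NormedModule)).
Qed.

Lemma smooth_plus f g : smooth_fun f -> smooth_fun g -> smooth_fun (fun x => f x + g x).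
Proof.
  intros Hf Hg.
  apply (smooth_of_derive_chain (fun n x => Derive_n f n x + Derive_n g n x)); [|reflexivity].
  intros n x. apply (is_derive_plus (Derive_n f n) (Derive_n g n)); apply derive_chain_Derive_n; assumption.
Qed.

Lemma smooth_minus f g : smooth_fun f -> smooth_fun g -> smooth_fun (fun x => f x - g x).
Proof.
  intros Hf Hg.
  apply (smooth_of_derive_chain (fun n x => Derive_n f n x - Derive_n g n x)); [|reflexivity].
  intros n x. apply (is_derive_minus (Derive_n f n) (Derive_n g n)); apply derive_chain_Derive_n; assumption.
Qed.

Lemma smooth_scal c f : smooth_fun f -> smooth_fun (fun x => c * f x).
Proof.
  intros Hf. apply (smooth_of_derive_chain (fun n x => c * Derive_n f n x)); [|reflexivity].
  intros n x. apply (is_derive_scal (Derive_n f n)), derive_chain_Derive_n, Hf.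
Qed.

Lemma smooth_Rsum {A} (f : A -> R -> R) (l : list A) : (forall i, In i l -> smooth_fun (f i)) ->
  smooth_fun (fun x => Rsum (map (fun i => f i x) l)).
Proof.
  induction l as [|i l IH]; simpl; intros H; [apply smooth_const|].
  apply smooth_plus; auto.
Qed.

Lemma is_derive_Rsum {A} (f f' : A -> R -> R) (l : list A) x :
  (forall i, In i l -> is_derive (f i) x (f' i x)) ->
  is_derive (fun x => Rsum (map (fun i => f i x) l)) x (Rsum (map (fun i => f' i x) l)).
Proof.
  induction l as [|i l IH]; simpl; intros H; [apply (is_derive_const (K:=R_AbsRing) (V:=R_NormedModule))|].
  apply (is_derive_plus (f i) (fun x => Rsum (map (fun i => f i x) l))); auto.
Qed.

Lemma Derive_n_minus_smooth f g n x : smooth_fun f -> smooth_fun g ->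
  Derive_n (fun y => f y - g y) n x = Derive_n f n x - Derive_n g n x.
Proof. intros Hf Hg; apply Derive_n_minus; apply filter_forall; intros y k _; auto. Qed.

Lemma is_derive_affine (a b x : R) : is_derive (fun x => a * x + b) x a.
Proof. auto_derive; [trivial|ring]. Qed.

Definition affine_derivs (a b : R) (n : nat) : R -> R :=
  match n with O => fun x => a * x + b | 1%nat => fun _ => a | _ => fun _ => 0 end.

Lemma derive_chain_affine_derivs a b : derive_chain (affine_derivs a b).
Proof.
  intros [|[|n]] x; [apply is_derive_affine|..]; apply (is_derive_const (K:=R_AbsRing) (V:=R_NormedModule)).
Qed.

Lemma smooth_affine a b : smooth_fun (fun x => a * x + b).
Proof. apply (smooth_derive_chain (affine_derivs a b)), derive_chain_affine_derivs. Qed.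

Lemma Derive_n_scal_id c n x : Derive_n (fun y => c * y) n x = affine_derivs c 0 n x.
Proof.
  rewrite <- (Derive_n_derive_chain _ (derive_chain_affine_derivs c 0)).
  apply Derive_n_ext; intros y; simpl; ring.
Qed.

Definition affine_chain (F : nat -> R -> R) (a b : R) : nat -> R -> R :=
  fun n x => a ^ n * F n (a * x + b).

Lemma derive_chain_affine F a b : derive_chain F -> derive_chain (affine_chain F a b).
Proof.
  intros H n x. unfold affine_chain. simpl pow.
  replace (a * a ^ n * F (S n) (a * x + b)) with (a ^ n * (a * F (S n) (a * x + b))) by ring.
  apply (is_derive_scal (fun x => F n (a * x + b))).
  apply (is_derive_comp (F n) (fun x => a * x + b)); [apply H|].
  evar_last; [apply is_derive_affine|]. simpl. unfold scal; simpl; unfold mult; simpl. ring.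
Qed.

Lemma smooth_comp_affine f a b : smooth_fun f -> smooth_fun (fun x => f (a * x + b)).
Proof.
  intros Hf. apply (smooth_of_derive_chain (affine_chain (Derive_n f) a b)).
  - apply derive_chain_affine, derive_chain_Derive_n, Hf.
  - intros x; unfold affine_chain; simpl; ring.
Qed.

Lemma Derive_n_scal_comp_affine f c a b n x : smooth_fun f ->
  Derive_n (fun u => c * f (a * u + b)) n x = c * a ^ n * Derive_n f n (a * x + b).
Proof.
  intros Hf. rewrite Derive_n_scal_l, Rmult_assoc. f_equal.
  change (a ^ n * Derive_n f n (a * x + b)) with (affine_chain (Derive_n f) a b n x).
  rewrite <- (Derive_n_derive_chain _ (derive_chain_affine _ a b (derive_chain_Derive_n f Hf))).
  apply Derive_n_ext; intros t; unfold affine_chain; simpl; ring.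
Qed.

(** * Flat functions and Hadamard's lemma *)

Definition cut_neg (D : R -> R) (u : R) : R := if Rlt_dec u 0 then D u else 0.

Lemma smooth_cut_neg D : smooth_fun D -> (forall n, Derive_n D n 0 = 0) ->
  smooth_fun (cut_neg D).
Proof.
  intros HD Hflat. pose proof (derive_chain_Derive_n D HD) as HC.
  apply (smooth_of_derive_chain (fun n => cut_neg (Derive_n D n))); [|reflexivity].
  intros n x. unfold cut_neg at 2.
  destruct (Rlt_dec x 0) as [Hx|Hx].
  - apply is_derive_ext_loc with (Derive_n D n); [|apply HC].
    apply filter_imp with (fun u => u < 0); [|apply (open_lt 0 x Hx)].
    intros t Ht; unfold cut_neg; destruct (Rlt_dec t 0); tauto.
  - destruct (Rle_lt_or_eq_dec 0 x (Rnot_lt_le _ _ Hx)) as [Hpos|<-].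
    + apply is_derive_ext_loc with (fun _ => 0);
        [|apply (is_derive_const (K:=R_AbsRing) (V:=R_NormedModule))].
      apply filter_imp with (fun u => 0 < u); [|apply (open_gt 0 x Hpos)].
      intros t Ht; unfold cut_neg; destruct (Rlt_dec t 0); [lra|auto].
    + apply is_derive_Reals. intros eps Heps.
      pose proof (HC n 0) as H0. apply is_derive_Reals in H0. rewrite Hflat in H0.
      destruct (H0 eps Heps) as [delta Hdelta]. exists delta. intros h Hh Hhd.
      specialize (Hdelta h Hh Hhd). unfold cut_neg. rewrite Rplus_0_l in *.
      destruct (Rlt_dec 0 0); [lra|].
      destruct (Rlt_dec h 0).
      * rewrite Hflat in Hdelta. exact Hdelta.
      * replace ((0 - 0) / h - 0) with 0 by (field; lra). rewrite Rabs_R0; auto.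
Qed.

(* [hadamard_chain r 0 t] is the quotient [r t / t] written as [∫_0^1 r'(s t) ds];
   [hadamard_chain r m] is its m-th derivative. *)
Definition hadamard_chain (r : R -> R) (m : nat) (t : R) : R :=
  RInt (fun s => s ^ m * Derive_n r (S m) (s * t)) 0 1.

Lemma is_derive_hadamard_integrand r m s x : smooth_fun r ->
  is_derive (fun u => s ^ m * Derive_n r (S m) (s * u)) x (s ^ S m * Derive_n r (S (S m)) (s * x)).
Proof.
  intros Hr. pose proof (derive_chain_Derive_n r Hr) as HC.
  evar_last. apply (is_derive_scal (fun u => Derive_n r (S m) (s * u))).
  apply (is_derive_comp (Derive_n r (S m)) (fun u => s * u)). apply HC.
  evar_last. apply is_derive_scal, is_derive_id. reflexivity.
  simpl. unfold scal; simpl; unfold mult, one; simpl. ring.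
Qed.

Lemma continuous_hadamard_integrand r m y x : smooth_fun r ->
  continuous (fun s => s ^ m * Derive_n r (S m) (s * y)) x.
Proof.
  intros Hr. pose proof (derive_chain_Derive_n r Hr) as HC.
  apply (ex_derive_continuous (K:=R_AbsRing) (V:=R_NormedModule)).
  apply ex_derive_mult; [apply ex_derive_pow, ex_derive_id|].
  apply (ex_derive_comp (Derive_n r (S m)) (fun s => s * y)); [eexists; apply HC|].
  apply ex_derive_mult; [apply ex_derive_id|apply ex_derive_const].
Qed.

Lemma derive_chain_hadamard r : smooth_fun r -> derive_chain (hadamard_chain r).
Proof.
  intros Hr m t. unfold hadamard_chain. evar_last.
  apply (is_derive_RInt_param (fun u s => s ^ m * Derive_n r (S m) (s * u)) 0 1 t).
  - apply filter_forall. intros x s _. eexists. apply is_derive_hadamard_integrand; auto.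
  - intros s _.
    apply continuity_2d_pt_ext with (fun u v => v ^ S m * Derive_n r (S (S m)) (v * u)).
    { intros u v. symmetry. apply is_derive_unique, is_derive_hadamard_integrand; auto. }
    apply continuity_2d_pt_mult.
    + apply (continuity_1d_2d_pt_comp (fun v => v ^ S m) (fun _ v => v)).
      * apply derivable_continuous_pt, derivable_pt_pow.
      * apply continuity_2d_pt_id2.
    + apply (continuity_1d_2d_pt_comp (Derive_n r (S (S m))) (fun u v => v * u)).
      * apply continuity_pt_smooth, smooth_Derive_n, Hr.
      * apply continuity_2d_pt_mult; [apply continuity_2d_pt_id2|apply continuity_2d_pt_id1].
  - apply filter_forall. intros y. apply (ex_RInt_continuous (V:=R_CompleteNormedModule)).
    intros z _. apply continuous_hadamard_integrand; auto.
  - apply RInt_ext. intros s _. apply is_derive_unique, is_derive_hadamard_integrand; auto.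
Qed.

Lemma RInt_Derive_scaled r t : smooth_fun r ->
  t * RInt (fun s => Derive r (s * t)) 0 1 = r t - r 0.
Proof.
  intros Hr.
  assert (Hcont : forall z, continuous (Derive r) z) by (intros; apply continuous_smooth, smooth_Derive, Hr).
  assert (Hex : ex_RInt (V:=R_CompleteNormedModule) (Derive r) (t * 0 + 0) (t * 1 + 0)).
  { apply (ex_RInt_continuous (V:=R_CompleteNormedModule)). intros z _. apply Hcont. }
  pose proof (RInt_comp_lin (V:=R_CompleteNormedModule) (Derive r) t 0 0 1 Hex) as Hlin.
  replace (t * 0 + 0) with 0 in Hlin by ring. replace (t * 1 + 0) with t in Hlin by ring.
  rewrite (RInt_Derive r 0 t) in Hlin by (intros; first [exact (Hr 1%nat _)|apply Hcont]).
  rewrite <- Hlin, RInt_scal.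
  - unfold scal; simpl; unfold mult; simpl. f_equal.
    apply RInt_ext. intros s _. f_equal. ring.
  - apply (ex_RInt_continuous (V:=R_CompleteNormedModule)). intros z _.
    apply (continuous_comp (fun y => t * y + 0) (Derive r)); [|apply Hcont].
    apply (ex_derive_continuous (K:=R_AbsRing) (V:=R_NormedModule)). eexists; apply is_derive_affine.
Qed.

Lemma hadamard_division r : smooth_fun r -> r 0 = 0 ->
  exists rho, smooth_fun rho /\ (forall t, t * rho t = r t) /\ rho 0 = Derive r 0.
Proof.
  intros Hr H0. exists (hadamard_chain r 0). split; [|split].
  - apply (smooth_derive_chain (hadamard_chain r)), derive_chain_hadamard, Hr.
  - intros t. rewrite <- (Rminus_0_r (r t)), <- H0, <- RInt_Derive_scaled by exact Hr.
    unfold hadamard_chain. f_equal. apply RInt_ext. intros s _. simpl. ring_simplify. reflexivity.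
  - unfold hadamard_chain. rewrite (RInt_ext _ (fun _ => Derive r 0)).
    + rewrite RInt_const. unfold scal; simpl; unfold mult; simpl. ring.
    + intros s _. simpl. rewrite Rmult_0_r, Rmult_1_l. reflexivity.
Qed.

(** * Sums of products of one-variable functions on [R^n] *)

Fixpoint coord_prod (T : nat -> R -> R) (n : nat) (x : nat -> R) : R :=
  match n with O => 1 | S n => coord_prod T n x * T n (x n) end.

Definition sep_fun (n : nat) (c : R) (Ts : list (nat -> R -> R)) (x : nat -> R) : R :=
  c + Rsum (map (fun T => coord_prod T n x) Ts).

Definition derive_factor (i : nat) (T : nat -> R -> R) : nat -> R -> R :=
  fun m => if Nat.eqb m i then Derive (T m) else T m.

Definition smooth_factors (Ts : list (nat -> R -> R)) : Prop :=
  List.Forall (fun T => forall m, smooth_fun (T m)) Ts.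

Lemma coord_prod_ext T n x y : (forall m, (m < n)%nat -> x m = y m) ->
  coord_prod T n x = coord_prod T n y.
Proof.
  induction n as [|n IH]; simpl; intros H; [reflexivity|].
  rewrite IH by (intros; apply H; lia). rewrite H by lia. reflexivity.
Qed.

Lemma sep_fun_ext n c Ts x y : (forall m, (m < n)%nat -> x m = y m) ->
  sep_fun n c Ts x = sep_fun n c Ts y.
Proof.
  intros H. unfold sep_fun. f_equal.
  induction Ts as [|T Ts IH]; simpl; [reflexivity|]. rewrite IH, (coord_prod_ext _ _ _ _ H); reflexivity.
Qed.

Lemma coord_prod_upd_ge T n x i t : (n <= i)%nat -> coord_prod T n (upd x i t) = coord_prod T n x.
Proof. intros H; apply coord_prod_ext. intros m Hm; unfold upd. destruct (Nat.eqb_spec m i); [lia|auto]. Qed.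

Lemma coord_prod_derive_factor_ge T n x i : (n <= i)%nat ->
  coord_prod (derive_factor i T) n x = coord_prod T n x.
Proof.
  induction n as [|n IH]; simpl; intros H; [reflexivity|].
  rewrite IH by lia. unfold derive_factor. destruct (Nat.eqb_spec n i); [lia|reflexivity].
Qed.

Lemma is_derive_coord_prod T n x i t : (i < n)%nat -> (forall m, smooth_fun (T m)) ->
  is_derive (fun t => coord_prod T n (upd x i t)) t (coord_prod (derive_factor i T) n (upd x i t)).
Proof.
  intros Hi HT. revert t. induction n as [|n IH]; intros t; [lia|]. simpl.
  destruct (Nat.eq_dec i n) as [->|Hn].
  - apply is_derive_ext with (fun t => coord_prod T n x * T n t).
    { intros u. rewrite coord_prod_upd_ge by lia. unfold upd. rewrite Nat.eqb_refl. reflexivity. }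
    rewrite coord_prod_derive_factor_ge, coord_prod_upd_ge by lia.
    unfold derive_factor, upd. rewrite !Nat.eqb_refl.
    apply (is_derive_scal (T n)), is_derive_smooth, HT.
  - assert (E : forall u, upd x i u n = x n).
    { intros; unfold upd; destruct (Nat.eqb_spec n i); [lia|reflexivity]. }
    rewrite E. unfold derive_factor at 2. destruct (Nat.eqb_spec n i); [lia|].
    apply is_derive_ext with (fun t => T n (x n) * coord_prod T n (upd x i t)).
    { intros u. rewrite E. apply Rmult_comm. }
    rewrite Rmult_comm. apply (is_derive_scal (fun t => coord_prod T n (upd x i t))), IH. lia.
Qed.

Lemma is_derive_sep_fun n c Ts x i t : (i < n)%nat -> smooth_factors Ts ->
  is_derive (fun t => sep_fun n c Ts (upd x i t)) t (sep_fun n 0 (map (derive_factor i) Ts) (upd x i t)).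
Proof.
  intros Hi HT. unfold smooth_factors in HT. rewrite List.Forall_forall in HT.
  unfold sep_fun. rewrite map_map. evar_last.
  - apply (is_derive_plus (fun _ => c)); [apply (is_derive_const (K:=R_AbsRing) (V:=R_NormedModule))|].
    apply (is_derive_Rsum (fun T t => coord_prod T n (upd x i t))
                          (fun T t => coord_prod (derive_factor i T) n (upd x i t))).
    intros T HT0. apply is_derive_coord_prod; auto.
  - simpl; unfold plus, zero; simpl; ring.
Qed.

Lemma smooth_factors_derive i Ts : smooth_factors Ts -> smooth_factors (map (derive_factor i) Ts).
Proof.
  intros H. induction H as [|T Ts HT _ IH]; simpl; constructor; auto.
  intros m. unfold derive_factor. destruct (Nat.eqb m i); [apply smooth_Derive|]; auto.
Qed.

Lemma upd_id x i : upd x i (x i) = x.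
Proof. apply functional_extensionality; intros k; unfold upd. destruct (Nat.eqb_spec k i); subst; auto. Qed.

Lemma partial_sep_fun n c Ts i : (i < n)%nat -> smooth_factors Ts ->
  partial i (sep_fun n c Ts) = sep_fun n 0 (map (derive_factor i) Ts).
Proof.
  intros Hi HT. apply functional_extensionality; intros x. unfold partial.
  rewrite <- (upd_id x i) at 2. apply is_derive_unique, is_derive_sep_fun; auto.
Qed.

Lemma iter_partial_sep_fun n c Ts l : smooth_factors Ts -> List.Forall (fun i => (i < n)%nat) l ->
  exists c' Ts', smooth_factors Ts' /\ iter_partial l (sep_fun n c Ts) = sep_fun n c' Ts'.
Proof.
  intros HT Hl. induction Hl as [|i l Hi _ [c' [Ts' [HTs' E]]]]; [exists c, Ts; auto|].
  exists 0, (map (derive_factor i) Ts'). simpl. rewrite E. split.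
  - apply smooth_factors_derive, HTs'.
  - apply partial_sep_fun; assumption.
Qed.

Lemma cont_Rn_const n c : cont_Rn n (fun _ => c).
Proof. intros x eps He. exists 1; split; [lra|]. intros; rewrite Rminus_eq_0, Rabs_R0; auto. Qed.

Lemma cont_Rn_plus n F G : cont_Rn n F -> cont_Rn n G -> cont_Rn n (fun x => F x + G x).
Proof.
  intros HF HG x eps He.
  destruct (HF x (eps / 2)) as [d1 [Hd1 H1]]; [lra|].
  destruct (HG x (eps / 2)) as [d2 [Hd2 H2]]; [lra|].
  exists (Rmin d1 d2); split; [apply Rmin_pos; auto|].
  intros y Hy.
  assert (A1 := H1 y (fun i Hi => Rlt_le_trans _ _ _ (Hy i Hi) (Rmin_l _ _))).
  assert (A2 := H2 y (fun i Hi => Rlt_le_trans _ _ _ (Hy i Hi) (Rmin_r _ _))).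
  replace (F y + G y - (F x + G x)) with ((F y - F x) + (G y - G x)) by ring.
  eapply Rle_lt_trans; [apply Rabs_triang|lra].
Qed.

Lemma cont_Rn_mult n F G : cont_Rn n F -> cont_Rn n G -> cont_Rn n (fun x => F x * G x).
Proof.
  intros HF HG x eps He.
  set (A := F x). set (B := G x).
  assert (HA : 0 < Rabs A + 1) by (pose proof (Rabs_pos A); lra).
  assert (HB : 0 < Rabs B + 1) by (pose proof (Rabs_pos B); lra).
  destruct (HF x (eps / 2 / (Rabs B + 1))) as [d1 [Hd1 H1]]; [apply Rdiv_lt_0_compat; lra|].
  destruct (HG x (Rmin 1 (eps / 2 / (Rabs A + 1)))) as [d2 [Hd2 H2]].
  { apply Rmin_pos; [lra|apply Rdiv_lt_0_compat; lra]. }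
  exists (Rmin d1 d2); split; [apply Rmin_pos; auto|].
  intros y Hy.
  assert (A1 := H1 y (fun i Hi => Rlt_le_trans _ _ _ (Hy i Hi) (Rmin_l _ _))).
  assert (A2 := H2 y (fun i Hi => Rlt_le_trans _ _ _ (Hy i Hi) (Rmin_r _ _))).
  fold A B in A1, A2 |- *.
  pose proof (Rmin_l 1 (eps / 2 / (Rabs A + 1))). pose proof (Rmin_r 1 (eps / 2 / (Rabs A + 1))).
  replace (F y * G y - A * B) with ((F y - A) * G y + A * (G y - B)) by ring.
  eapply Rle_lt_trans; [apply Rabs_triang|]. rewrite !Rabs_mult.
  assert (G1 : Rabs (G y) <= Rabs B + 1).
  { replace (G y) with ((G y - B) + B) by ring. eapply Rle_trans; [apply Rabs_triang|lra]. }
  assert (T1 : Rabs (F y - A) * Rabs (G y) <= eps / 2).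
  { apply Rle_trans with (eps / 2 / (Rabs B + 1) * (Rabs B + 1)).
    - apply Rmult_le_compat; try apply Rabs_pos; lra.
    - right; field; lra. }
  assert (T2 : Rabs A * Rabs (G y - B) < eps / 2).
  { apply Rle_lt_trans with (Rabs A * (eps / 2 / (Rabs A + 1))).
    - apply Rmult_le_compat_l; [apply Rabs_pos|lra].
    - apply Rlt_le_trans with ((Rabs A + 1) * (eps / 2 / (Rabs A + 1))).
      + apply Rmult_lt_compat_r; [apply Rdiv_lt_0_compat|]; lra.
      + right; field; lra. }
  lra.
Qed.

Lemma cont_Rn_coord n m phi : (m < n)%nat -> (forall t, continuity_pt phi t) ->
  cont_Rn n (fun x => phi (x m)).
Proof.
  intros Hm Hphi x eps He. destruct (Hphi (x m) eps He) as [d [Hd H]].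
  exists d; split; auto. intros y Hy.
  destruct (Req_dec (y m) (x m)) as [E|E]; [rewrite E, Rminus_eq_0, Rabs_R0; auto|].
  apply H. split; [split; [exact I|auto]|]. simpl; unfold R_dist; auto.
Qed.

Lemma cont_Rn_coord_prod N T n : (n <= N)%nat -> (forall m, smooth_fun (T m)) ->
  cont_Rn N (coord_prod T n).
Proof.
  intros Hn HT. induction n as [|n IH]; simpl; [apply cont_Rn_const|].
  apply cont_Rn_mult; [apply IH; lia|].
  apply cont_Rn_coord; [lia|]. intros; apply continuity_pt_smooth, HT.
Qed.

Lemma cont_Rn_sep_fun n c Ts : smooth_factors Ts -> cont_Rn n (sep_fun n c Ts).
Proof.
  intros H. unfold sep_fun. apply cont_Rn_plus; [apply cont_Rn_const|].
  induction H as [|T Ts HT _ IH]; simpl; [apply cont_Rn_const|].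
  apply cont_Rn_plus; [apply cont_Rn_coord_prod; auto|exact IH].
Qed.

Lemma smooth_Rn_sep_fun n c Ts : smooth_factors Ts -> smooth_Rn n (sep_fun n c Ts).
Proof.
  intros HT. split; [intros x y H; apply sep_fun_ext; auto|].
  intros l Hl. destruct (iter_partial_sep_fun n c Ts l HT Hl) as [c' [Ts' [HTs' ->]]].
  split; [apply cont_Rn_sep_fun; auto|].
  intros i x Hi. eexists. apply is_derive_sep_fun; auto.
Qed.

Definition factor1 (j : nat) (phi : R -> R) : nat -> R -> R :=
  fun m => if Nat.eqb m j then phi else (fun _ => 1).

Definition factor2 (j1 j2 : nat) (phi psi : R -> R) : nat -> R -> R :=
  fun m => if Nat.eqb m j1 then phi else if Nat.eqb m j2 then psi else (fun _ => 1).

Lemma coord_prod_factor1 j phi n x :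
  coord_prod (factor1 j phi) n x = if Nat.ltb j n then phi (x j) else 1.
Proof.
  induction n as [|n IH]; simpl; [reflexivity|]. rewrite IH. unfold factor1.
  destruct (Nat.ltb_spec j n), (Nat.ltb_spec j (S n)), (Nat.eqb_spec n j); try lia; subst; ring.
Qed.

Lemma coord_prod_factor2 j1 j2 phi psi n x : j1 <> j2 ->
  coord_prod (factor2 j1 j2 phi psi) n x =
  (if Nat.ltb j1 n then phi (x j1) else 1) * (if Nat.ltb j2 n then psi (x j2) else 1).
Proof.
  intros Hj. induction n as [|n IH]; simpl; [ring|]. rewrite IH. unfold factor2.
  destruct (Nat.ltb_spec j1 n), (Nat.ltb_spec j1 (S n)), (Nat.eqb_spec n j1),
    (Nat.ltb_spec j2 n), (Nat.ltb_spec j2 (S n)), (Nat.eqb_spec n j2); try lia; subst; ring.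
Qed.

Lemma smooth_factor1 j phi m : smooth_fun phi -> smooth_fun (factor1 j phi m).
Proof. intros H. unfold factor1. destruct (Nat.eqb m j); [exact H|apply smooth_const]. Qed.

Lemma smooth_factors_factor1 j phi : smooth_fun phi -> smooth_factors [factor1 j phi].
Proof. intros H. repeat constructor. intros m. apply smooth_factor1, H. Qed.

Lemma smooth_factors_factor2 j1 j2 phi psi : smooth_fun phi -> smooth_fun psi ->
  smooth_factors [factor2 j1 j2 phi psi].
Proof.
  intros H1 H2. repeat constructor. intros m. unfold factor2.
  destruct (Nat.eqb m j1); [exact H1|]. destruct (Nat.eqb m j2); [exact H2|apply smooth_const].
Qed.

Lemma smooth_factors_factor1s (phi : nat -> R -> R) l : (forall i, In i l -> smooth_fun (phi i)) ->
  smooth_factors (map (fun i => factor1 i (phi i)) l).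
Proof.
  induction l as [|i l IH]; simpl; intros H; constructor.
  - intros m. apply smooth_factor1, H. left; reflexivity.
  - apply IH; auto.
Qed.

Lemma smooth_factors_app l1 l2 : smooth_factors l1 -> smooth_factors l2 -> smooth_factors (l1 ++ l2).
Proof. intros; apply List.Forall_app; split; assumption. Qed.

Lemma sep_fun_nil N c x : sep_fun N c [] x = c.
Proof. unfold sep_fun; simpl; ring. Qed.

Lemma sep_fun_app N c l1 l2 x : sep_fun N c (l1 ++ l2) x = sep_fun N c l1 x + sep_fun N 0 l2 x.
Proof. unfold sep_fun. rewrite map_app, Rsum_app. ring. Qed.

Lemma sep_fun_factor1 N c j phi x : (j < N)%nat -> sep_fun N c [factor1 j phi] x = c + phi (x j).
Proof.
  intros Hj. unfold sep_fun. simpl. rewrite coord_prod_factor1. destruct (Nat.ltb_spec j N); [ring|lia].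
Qed.

Lemma sep_fun_factor1s N c (phi : nat -> R -> R) l x : (forall i, In i l -> (i < N)%nat) ->
  sep_fun N c (map (fun i => factor1 i (phi i)) l) x = c + Rsum (map (fun i => phi i (x i)) l).
Proof.
  intros H. unfold sep_fun. f_equal. rewrite map_map. apply Rsum_ext. intros i Hi.
  rewrite coord_prod_factor1. destruct (Nat.ltb_spec i N); [reflexivity|]. specialize (H i Hi); lia.
Qed.

Lemma sep_fun_factor2 N c j1 j2 phi psi x : (j1 < N)%nat -> (j2 < N)%nat -> j1 <> j2 ->
  sep_fun N c [factor2 j1 j2 phi psi] x = c + phi (x j1) * psi (x j2).
Proof.
  intros H1 H2 H3. unfold sep_fun. simpl. rewrite coord_prod_factor2 by auto.
  destruct (Nat.ltb_spec j1 N); [|lia]. destruct (Nat.ltb_spec j2 N); [|lia]. ring.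
Qed.

(** * The value group *)

Lemma subgroup_opp Gam g : subgroup Gam -> Gam g -> Gam (- g).
Proof. intros [H0 H] Hg. replace (-g) with (0 - g) by ring. auto. Qed.

Lemma subgroup_plus Gam a b : subgroup Gam -> Gam a -> Gam b -> Gam (a + b).
Proof.
  intros HG Ha Hb. replace (a + b) with (a - (- b)) by ring. apply HG; [exact Ha|]. apply subgroup_opp; auto.
Qed.

Lemma subgroup_nat_mul Gam g n : subgroup Gam -> Gam g -> Gam (INR n * g).
Proof.
  intros HG Hg. induction n. simpl; rewrite Rmult_0_l; apply HG.
  rewrite S_INR, Rmult_plus_distr_r, Rmult_1_l. apply subgroup_plus; auto.
Qed.

Lemma subgroup_IZR_mul Gam g z : subgroup Gam -> Gam g -> Gam (IZR z * g).
Proof.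
  intros HG Hg. destruct z.
  - simpl; rewrite Rmult_0_l; apply HG.
  - rewrite <- positive_nat_Z, <- INR_IZR_INZ. apply subgroup_nat_mul; auto.
  - replace (IZR (Z.neg p) * g) with (- (IZR (Z.pos p) * g)).
    apply subgroup_opp; auto. rewrite <- positive_nat_Z, <- INR_IZR_INZ. apply subgroup_nat_mul; auto.
    rewrite <- Pos2Z.opp_pos, opp_IZR. ring.
Qed.

Lemma INR_unbounded x : exists N : nat, x < INR N.
Proof.
  destruct (archimed x) as [H1 H2].
  exists (Z.to_nat (up x) + 1)%nat. rewrite plus_INR. simpl.
  destruct (Z_lt_le_dec (up x) 0).
  - pose proof (pos_INR (Z.to_nat (up x))). apply IZR_lt in l. lra.
  - rewrite INR_IZR_INZ, Z2Nat.id by auto. lra.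
Qed.

Lemma Gbar_small_step Gam l : subgroup Gam -> Gam l -> 0 < l -> forall eps, 0 < eps ->
  exists d, 0 < d < eps /\ forall z, Gbar Gam (IZR z * d).
Proof.
  intros HG Hl Hl0 eps He.
  (* If Gam is discrete, [l / N] works for large N; otherwise Gam itself has small elements. *)
  destruct (classic (discrete Gam)) as [Hd|Hd].
  - destruct (INR_unbounded (l / eps)) as [N HN].
    assert (HN0 : 0 < INR N). { apply Rlt_trans with (l/eps); auto. apply Rdiv_lt_0_compat; auto. }
    exists (l / INR N). split. split. apply Rdiv_lt_0_compat; auto.
    apply Rmult_lt_reg_r with (INR N); auto. unfold Rdiv; rewrite Rmult_assoc, Rinv_l by lra.
    apply Rmult_lt_reg_r with (/ eps). apply Rinv_0_lt_compat; auto.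
    rewrite Rmult_1_r. rewrite (Rmult_comm eps), Rmult_assoc, Rinv_r by lra. rewrite Rmult_1_r. exact HN.
    intros z. left. split; auto. exists N. split.
    destruct N; [simpl in HN0; lra| lia].
    replace (INR N * (IZR z * (l / INR N))) with (IZR z * l) by (field; lra).
    apply subgroup_IZR_mul; auto.
  - assert (exists g, Gam g /\ g <> 0 /\ Rabs g < eps) as [g [Hg1 [Hg2 Hg3]]].
    { apply NNPP; intros Hn. apply Hd. exists eps. split; auto. intros g Hg Hg0.
      apply Rnot_lt_le. intros Hlt. apply Hn. exists g; auto. }
    exists (Rabs g). split. split; auto. apply Rabs_pos_lt; auto.
    intros z. right. split; auto. apply subgroup_IZR_mul; auto.
    destruct (Rcase_abs g). rewrite Rabs_left by auto. apply subgroup_opp; auto.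
    rewrite Rabs_right by auto; auto.
Qed.

Lemma Gbar_dense Gam l : subgroup Gam -> Gam l -> 0 < l -> forall a b, a < b ->
  exists y, a < y < b /\ Gbar Gam y.
Proof.
  intros HG Hl Hl0 a b Hab. destruct (Gbar_small_step Gam l HG Hl Hl0 (b - a)) as [d [[Hd1 Hd2] Hz]]; [lra|].
  destruct (archimed (a / d)) as [H1 H2].
  exists (IZR (up (a / d)) * d). split; [|apply Hz]. split.
  - apply Rmult_lt_reg_r with (/ d). apply Rinv_0_lt_compat; auto.
    rewrite Rmult_assoc, Rinv_r, Rmult_1_r by lra. exact H1.
  - assert (IZR (up (a / d)) * d <= (a / d + 1) * d) by (apply Rmult_le_compat_r; lra).
    replace ((a / d + 1) * d) with (a + d) in H by (field; lra). lra.
Qed.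

Lemma tpt_int G e y : 0 < y < g_len G e -> tpt G e y = PE e y.
Proof. intros H. unfold tpt. destruct (Req_EM_T y 0), (Req_EM_T y (g_len G e)); [lra..|reflexivity]. Qed.

Lemma tpt_0 G e : tpt G e 0 = PV (g_src G e).
Proof. unfold tpt. destruct (Req_EM_T 0 0); [auto|lra]. Qed.

Lemma tpt_len G e : 0 < g_len G e -> tpt G e (g_len G e) = PV (g_tgt G e).
Proof.
  intros H. unfold tpt. destruct (Req_EM_T (g_len G e) 0); [lra|].
  destruct (Req_EM_T (g_len G e) (g_len G e)); [reflexivity|lra].
Qed.

Lemma tpt_PE_inv G e y e' y' : tpt G e y = PE e' y' -> e = e' /\ y = y'.
Proof.
  unfold tpt. destruct (Req_EM_T y 0), (Req_EM_T y (g_len G e)); try discriminate.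
  intros H; inversion H; auto.
Qed.

Lemma incident_In G v e : In e (incident G v) <-> (e < g_nE G)%nat /\ (g_src G e = v \/ g_tgt G e = v).
Proof.
  unfold incident. rewrite filter_In, in_seq. rewrite Bool.orb_true_iff, !Nat.eqb_eq. lia.
Qed.

Lemma incident_NoDup G v : NoDup (incident G v).
Proof. apply NoDup_filter, seq_NoDup. Qed.

(** * The star of a vertex *)

Definition star_edge (G : wgraph) (v j : nat) : nat := nth j (incident G v) 0%nat.
Definition outgoing (G : wgraph) (v j : nat) : bool := Nat.eqb (g_src G (star_edge G v j)) v.

Definition star_graph (G : wgraph) (v : nat) (rad : nat -> R) (bnd : nat -> Prop) : wgraph := {|
  g_nV := S (valency G v); g_nE := valency G v;
  g_src := fun j => if outgoing G v j then 0%nat else S j;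
  g_tgt := fun j => if outgoing G v j then S j else 0%nat;
  g_len := rad; g_wt := fun j => g_wt G (star_edge G v j); g_bnd := bnd |}.

Definition star_off (G : wgraph) (v : nat) (rad : nat -> R) (j : nat) : R :=
  if outgoing G v j then 0 else g_len G (star_edge G v j) - rad j.

Definition star_end (G : wgraph) (v : nat) (rad : nat -> R) (j : nat) : R :=
  if outgoing G v j then rad j else g_len G (star_edge G v j) - rad j.

Definition star_with_bnd (G : wgraph) (v : nat) (rad : nat -> R) (bnd : nat -> Prop) : subgraph := {|
  sg := star_graph G v rad bnd; sg_par := star_edge G v; sg_off := star_off G v rad;
  sg_vpt := fun u => match u with O => PV v | S j => PE (star_edge G v j) (star_end G v rad j) end |}.

(* [sub_bnd] does not read the boundary field of the subgraph, so the induced boundary of the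
   star can be computed on a copy with a dummy boundary. *)
Definition star_sub (G : wgraph) (v : nat) (rad : nat -> R) : subgraph :=
  star_with_bnd G v rad (fun u => sub_bnd G (star_with_bnd G v rad (fun _ => False)) u).

Definition star_dist (G : wgraph) (v : nat) (rad : nat -> R) (j : nat) (y : R) : R :=
  if outgoing G v j then y else rad j - y.
Definition star_trop_map (G : wgraph) (v : nat) (rad : nat -> R) (slope : nat -> nat -> Z)
  (i j : nat) (y : R) : R :=
  IZR (slope i j) * star_dist G v rad j y.

Definition star_radii (G : wgraph) (v : nat) (rad : nat -> R) : Prop :=
  forall j, (j < valency G v)%nat -> 0 < rad j < g_len G (star_edge G v j).

Lemma star_edge_incident G v j : (j < valency G v)%nat -> In (star_edge G v j) (incident G v).
Proof. intros; apply nth_In; auto. Qed.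

Lemma star_edge_spec G v j : (j < valency G v)%nat ->
  (star_edge G v j < g_nE G)%nat /\ (g_src G (star_edge G v j) = v \/ g_tgt G (star_edge G v j) = v).
Proof. intros H; apply incident_In, star_edge_incident; auto. Qed.

Lemma star_edge_inj G v i j : (i < valency G v)%nat -> (j < valency G v)%nat ->
  star_edge G v i = star_edge G v j -> i = j.
Proof. intros Hi Hj E. apply (proj1 (NoDup_nth (incident G v) 0%nat) (incident_NoDup G v)); auto. Qed.

Lemma star_edge_surj G v e : (e < g_nE G)%nat -> (g_src G e = v \/ g_tgt G e = v) ->
  exists j, (j < valency G v)%nat /\ star_edge G v j = e.
Proof.
  intros H1 H2. assert (In e (incident G v)) as Hin by (apply incident_In; auto).
  destruct (In_nth _ _ 0%nat Hin) as [j [Hj E]]. exists j; split; auto.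
Qed.

Lemma outgoing_src G v j : outgoing G v j = true -> g_src G (star_edge G v j) = v.
Proof. unfold outgoing; intros H; apply Nat.eqb_eq; auto. Qed.

Lemma incoming_tgt G v j : wf_graph G -> (j < valency G v)%nat -> outgoing G v j = false ->
  g_tgt G (star_edge G v j) = v /\ g_src G (star_edge G v j) <> v.
Proof.
  unfold outgoing; intros HW Hj H. apply Nat.eqb_neq in H.
  destruct (star_edge_spec G v j Hj) as [_ [E|E]]; tauto.
Qed.

Lemma star_edge_len_pos G v j : wf_graph G -> (j < valency G v)%nat -> 0 < g_len G (star_edge G v j).
Proof. intros HW Hj. destruct (star_edge_spec G v j Hj) as [H _]. apply (HW _ H). Qed.

Definition min_radius (k : nat) (rad : nat -> R) : R := fold_right Rmin 1 (map rad (seq 0 k)).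

Lemma min_radius_pos k rad : (forall j, (j < k)%nat -> 0 < rad j) -> 0 < min_radius k rad.
Proof.
  unfold min_radius. intros H.
  assert (forall l, (forall x, In x l -> 0 < x) -> 0 < fold_right Rmin 1 l) as Gen.
  { induction l; simpl; intros; [lra|]. apply Rmin_pos; auto. }
  apply Gen. intros x Hx. apply in_map_iff in Hx.
  destruct Hx as [m [<- Hm]]. apply in_seq in Hm. apply H; lia.
Qed.

Lemma min_radius_le k rad j : (j < k)%nat -> min_radius k rad <= rad j.
Proof.
  unfold min_radius. intros Hj. assert (In (rad j) (map rad (seq 0 k))) as Hin.
  { apply in_map, in_seq; lia. }
  generalize Hin. generalize (map rad (seq 0 k)). induction l; simpl; intros H; [tauto|].
  destruct H as [<-|H]. apply Rmin_l. eapply Rle_trans; [apply Rmin_r|auto].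
Qed.

Lemma in_star_PE G v rad bnd e y : wf_graph G -> star_radii G v rad ->
  in_sub G (star_with_bnd G v rad bnd) (PE e y) ->
  exists j, (j < valency G v)%nat /\ e = star_edge G v j /\
    (if outgoing G v j then y <= rad j else g_len G (star_edge G v j) - rad j <= y).
Proof.
  intros HW HD [[u [Hu E]]|[e' [y' [He [Hy E]]]]].
  - destruct u; simpl in E; [discriminate|]. inversion E; subst.
    exists u; split; [simpl in Hu; lia|]. split; auto. unfold star_end. destruct (outgoing G v u); lra.
  - simpl in *. symmetry in E. apply tpt_PE_inv in E. destruct E as [E1 E2]. subst.
    exists e'; split; auto. split; auto. unfold star_off in *. destruct (outgoing G v e'); lra.
Qed.

Lemma star_nbhd G v rad bnd : wf_graph G -> star_radii G v rad ->
  nbhd G (in_sub G (star_with_bnd G v rad bnd)) (PV v).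
Proof.
  intros HW HD. split.
  - left. exists 0%nat. simpl. split; [lia|auto].
  - exists (min_radius (valency G v) rad). split. apply min_radius_pos. intros j Hj; apply HD; auto.
    intros e y He Hy Hn. simpl in Hn.
    assert (g_src G e = v \/ g_tgt G e = v) as Hv by tauto.
    destruct (star_edge_surj G v e He Hv) as [j [Hj <-]].
    pose proof (min_radius_le (valency G v) rad j Hj). right. exists j.
    destruct (outgoing G v j) eqn:Ho.
    + pose proof (outgoing_src _ _ _ Ho).
      exists y. simpl. unfold star_off. rewrite Ho. split; auto.
      destruct Hn as [[_ Hn]|[Hn _]].
      split; [split; lra| rewrite Rplus_0_l; auto].
      exfalso. destruct (HW _ He) as [_ [_ [Hne _]]]. congruence.
    + destruct (incoming_tgt G v j HW Hj Ho) as [Ht Hs].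
      exists (y - (g_len G (star_edge G v j) - rad j)). simpl. unfold star_off. rewrite Ho.
      destruct Hn as [[Hn _]|[_ Hn]]; [tauto|].
      split; auto. split; [split; lra|]. f_equal. ring.
Qed.

Lemma star_end_not_nbhd G v rad bnd j : wf_graph G -> star_radii G v rad -> (j < valency G v)%nat ->
  ~ nbhd G (in_sub G (star_with_bnd G v rad bnd)) (PE (star_edge G v j) (star_end G v rad j)).
Proof.
  intros HW HD Hj [_ [eps [He H]]].
  destruct (HD j Hj) as [Hd1 Hd2]. set (len := g_len G (star_edge G v j)) in *.
  set (m := Rmin eps (len - rad j) / 2).
  assert (0 < m) by (unfold m; apply Rdiv_lt_0_compat; [apply Rmin_pos; lra|lra]).
  assert (m < eps) by (unfold m; pose proof (Rmin_l eps (len - rad j)); lra).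
  assert (m < len - rad j) by (unfold m; pose proof (Rmin_r eps (len - rad j)); lra).
  destruct (star_edge_spec G v j Hj) as [HjE _].
  unfold star_end in *. destruct (outgoing G v j) eqn:Ho.
  - specialize (H (star_edge G v j) (rad j + m) HjE). 
    rewrite tpt_int in H by (fold len; lra).
    destruct (in_star_PE G v rad bnd _ _ HW HD (H ltac:(fold len; lra) ltac:(simpl; split; auto; rewrite Rabs_right; lra)))
      as [j' [Hj' [E1 E2]]].
    apply star_edge_inj in E1; auto. subst j'. rewrite Ho in E2. lra.
  - specialize (H (star_edge G v j) (len - rad j - m) HjE).
    rewrite tpt_int in H by (fold len; lra).
    destruct (in_star_PE G v rad bnd _ _ HW HD (H ltac:(fold len; lra) ltac:(simpl; fold len; split; auto; rewrite Rabs_left; lra)))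
      as [j' [Hj' [E1 E2]]].
    apply star_edge_inj in E1; auto. subst j'. rewrite Ho in E2. fold len in E2. lra.
Qed.

Lemma star_sub_bnd_end G v rad j : wf_graph G -> star_radii G v rad -> (j < valency G v)%nat ->
  sub_bnd G (star_sub G v rad) (S j).
Proof.
  intros HW HD Hj. right. apply (star_end_not_nbhd G v rad _ j HW HD Hj).
Qed.

Lemma star_sub_bnd_center G v rad : wf_graph G -> star_radii G v rad ->
  (sub_bnd G (star_sub G v rad) 0 <-> g_bnd G v).
Proof.
  intros HW HD. split.
  - intros [[v' [E H]]|H]. simpl in E. inversion E; subst; auto.
    exfalso; apply H. apply (star_nbhd G v rad _ HW HD).
  - intros H. left. exists v. simpl; auto.
Qed.

Lemma star_is_subgraph G v rad : wf_graph G -> (v < g_nV G)%nat -> star_radii G v rad ->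
  is_subgraph G (star_sub G v rad).
Proof.
  intros HW Hv HD. unfold is_subgraph. split; [|split; [|split; [|split; [|split; [|split]]]]].
  - intros j Hj. simpl in *. destruct (star_edge_spec G v j Hj) as [HE _].
    destruct (HW _ HE) as [_ [_ [_ [_ Hw]]]]. destruct (HD j Hj).
    destruct (outgoing G v j); repeat split; try lia; auto.
  - intros u Hu. destruct u; simpl; auto. simpl in Hu.
    destruct (star_edge_spec G v u ltac:(lia)) as [HE _]. destruct (HD u ltac:(lia)).
    split; auto. unfold star_end; destruct (outgoing G v u); lra.
  - intros u1 u2 H1 H2 E. destruct u1, u2; simpl in E; try discriminate; auto.
    inversion E. f_equal. apply star_edge_inj in H0; auto; simpl in *; lia.
  - intros j Hj. simpl in Hj |- *. destruct (star_edge_spec G v j Hj) as [HE _]. destruct (HD j Hj).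
    unfold star_off, star_end. destruct (outgoing G v j) eqn:Ho; simpl; rewrite ?Ho; repeat split; auto; try lra.
    + rewrite tpt_0, (outgoing_src _ _ _ Ho); auto.
    + rewrite Rplus_0_l, tpt_int; auto.
    + rewrite tpt_int; auto. lra.
    + replace (g_len G (star_edge G v j) - rad j + rad j) with (g_len G (star_edge G v j)) by ring.
      rewrite tpt_len by lra. destruct (incoming_tgt G v j HW Hj Ho) as [Ht _]. rewrite Ht; auto.
  - intros e1 e2 H1 H2 Hne E. simpl in *. exfalso. apply Hne. apply star_edge_inj in E; auto.
  - intros u e Hu He y Hy. simpl in *. destruct (HD e He).
    assert (Hin : 0 < star_off G v rad e + y < g_len G (star_edge G v e)).
    { unfold star_off; destruct (outgoing G v e); lra. }
    rewrite tpt_int by auto. destruct u; [discriminate|].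
    intros E. inversion E as [[E1 E2]]. apply star_edge_inj in E1; [|lia|auto]. subst u.
    unfold star_end, star_off in *. destruct (outgoing G v e); lra.
  - intros u Hu. simpl. tauto.
Qed.

Lemma star_rational G Gam v rad : wf_graph G -> star_radii G v rad ->
  (forall j, (j < valency G v)%nat -> Gbar Gam (star_end G v rad j)) ->
  forall u, (u < g_nV (sg (star_sub G v rad)))%nat -> rational_pt G Gam (sg_vpt (star_sub G v rad) u).
Proof.
  intros HW HD HR u Hu. destruct u; simpl. left; eauto.
  right. simpl in Hu. destruct (HD u ltac:(lia)). destruct (star_edge_spec G v u ltac:(lia)) as [HE _].
  exists (star_edge G v u), (star_end G v rad u).
  assert (0 < star_end G v rad u < g_len G (star_edge G v u)) by (unfold star_end; destruct (outgoing G v u); lra).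
  split; auto. split. lra. split. apply HR; lia. rewrite tpt_int; auto.
Qed.

Lemma filter_all {A} (f : A -> bool) l : (forall x, In x l -> f x = true) -> filter f l = l.
Proof. induction l; simpl; intros H; auto. rewrite H by auto. f_equal; auto. Qed.

Lemma star_incident_center G v rad : incident (sg (star_sub G v rad)) 0 = seq 0 (valency G v).
Proof.
  unfold incident. simpl. apply filter_all. intros j _. destruct (outgoing G v j); simpl; auto.
Qed.

Lemma star_incident_end G v rad j e : In e (incident (sg (star_sub G v rad)) (S j)) -> e = j.
Proof.
  unfold incident. rewrite filter_In. simpl. intros [_ H].
  destruct (outgoing G v e); simpl in H;
  repeat match goal with H : context [Nat.eqb ?a ?b] |- _ => destruct (Nat.eqb_spec a b) end; simpl in H; try discriminate; lia.
Qed.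

Lemma star_outf_trop_map G v rad slope i j y : 
  outf (sg (star_sub G v rad)) false false (star_trop_map G v rad slope i) 0 j y = IZR (slope i j) * y.
Proof.
  unfold outf, star_trop_map, star_dist. simpl. destruct (outgoing G v j); simpl; [auto|].
  unfold rev_sign; simpl. ring.
Qed.

Definition out_wt (G : wgraph) (v j : nat) : R := INR (g_wt G (star_edge G v j)).

Definition out_sign (G : wgraph) (v j : nat) : R := if outgoing G v j then 1 else -1.

Lemma out_wt_pos G v j : wf_graph G -> (j < valency G v)%nat -> 0 < out_wt G v j.
Proof.
  intros HW Hj. destruct (star_edge_spec G v j Hj) as [HE _]. destruct (HW _ HE) as [_ [_ [_ [_ H]]]].
  apply lt_0_INR; auto.
Qed.

Definition balanced (G : wgraph) (v : nat) (s : nat -> Z) : Prop :=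
  Rsum (map (fun j => out_wt G v j * IZR (s j)) (seq 0 (valency G v))) = 0.

Definition balanced_slopes (G : wgraph) (v : nat) (slope : nat -> nat -> Z) (n : nat) : Prop :=
  forall i, (i < n)%nat -> balanced G v (slope i).

Lemma star_trop_map_eq G v rad slope i j y :
  star_trop_map G v rad slope i j y =
  out_sign G v j * IZR (slope i j) * y + (if outgoing G v j then 0 else IZR (slope i j) * rad j).
Proof. unfold star_trop_map, star_dist, out_sign. destruct (outgoing G v j); ring. Qed.

Lemma Derive_star_trop_map G v rad slope i j y :
  Derive (star_trop_map G v rad slope i j) y = out_sign G v j * IZR (slope i j).
Proof.
  apply is_derive_unique. eapply is_derive_ext; [intros t; symmetry; apply star_trop_map_eq|].
  apply is_derive_affine.
Qed.

Lemma smooth_star_trop_map G v rad slope i j : smooth_fun (star_trop_map G v rad slope i j).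
Proof. eapply smooth_ext; [intros t; symmetry; apply star_trop_map_eq|]. apply smooth_affine. Qed.

Lemma balanced_valency1 G v s : wf_graph G -> valency G v = 1%nat -> balanced G v s -> IZR (s 0%nat) = 0.
Proof.
  unfold balanced. intros HW Hk. rewrite Hk. simpl. rewrite Rplus_0_r. intros HB.
  pose proof (out_wt_pos G v 0 HW ltac:(lia)). apply Rmult_integral in HB. lra.
Qed.

Lemma is_form_star_trop_map G v rad slope i : wf_graph G -> star_radii G v rad ->
  (~ g_bnd G v -> balanced G v (slope i)) ->
  is_form (sg (star_sub G v rad)) false false (star_trop_map G v rad slope i).
Proof.
  intros HW HD HB. split; [intros j _; apply smooth_star_trop_map|].
  intros [|u] Hu; simpl in Hu.
  - assert (Ho : outf (sg (star_sub G v rad)) false false (star_trop_map G v rad slope i) 0 =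
                 fun j y => IZR (slope i j) * y).
    { do 2 (apply functional_extensionality; intros). apply star_outf_trop_map. }
    rewrite Ho. split; [intros _ e1 e2 _ _; ring|].
    intros Hnb. assert (Hnv : ~ g_bnd G v) by (rewrite <- (star_sub_bnd_center G v rad HW HD); exact Hnb).
    specialize (HB Hnv). unfold valency at 1 2 3. rewrite star_incident_center, length_seq.
    split; [|split].
    + intros Hk e He. apply in_seq in He. replace e with 0%nat by lia.
      exists 1. split; [lra|]. intros y _. simpl. rewrite (balanced_valency1 G v (slope i) HW Hk HB). ring.
    + intros Hk e1 e2 H1 H2 Hne [|[|m]]; rewrite !Derive_n_scal_id; simpl; [ring| |ring].
      unfold balanced in HB. rewrite Hk in HB. simpl in HB. unfold out_wt in HB.
      apply in_seq in H1. apply in_seq in H2.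
      assert ((e1 = 0 /\ e2 = 1) \/ (e1 = 1 /\ e2 = 0))%nat as [[-> ->]|[-> ->]] by lia; simpl; lra.
    + intros _. rewrite <- HB. apply Rsum_ext. intros e _. simpl. unfold out_wt. f_equal.
      apply is_derive_unique. eapply is_derive_ext; [|apply (is_derive_affine _ 0)]. intros t; simpl; ring.
  - split.
    + intros _ e1 e2 H1 H2. apply star_incident_end in H1. apply star_incident_end in H2. subst; reflexivity.
    + intros Hnb. exfalso. apply Hnb, (star_sub_bnd_end G v rad u HW HD). lia.
Qed.

Lemma star_trop G Gam v rad slope n : wf_graph G -> star_radii G v rad -> subgroup Gam ->
  (forall e, (e < g_nE G)%nat -> Gam (g_len G e)) ->
  (~ g_bnd G v -> balanced_slopes G v slope n) ->
  ZGam_trop G Gam (star_sub G v rad) n (star_trop_map G v rad slope).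
Proof.
  intros HW HD HG HL HB i Hi.
  assert (Hform := is_form_star_trop_map G v rad slope i HW HD (fun H => HB H i Hi)).
  split; [split; [exact Hform|]|]; intros j Hj; simpl in Hj |- *;
    setoid_rewrite star_trop_map_eq; unfold out_sign, star_off.
  - eexists _, _; intros y _; reflexivity.
  - destruct (star_edge_spec G v j Hj) as [HE _].
    pose proof (subgroup_IZR_mul Gam _ (slope i j) HG (HL _ HE)) as Hsl.
    set (L := g_len G (star_edge G v j)) in *. set (s := IZR (slope i j)) in *.
    destruct (outgoing G v j); [exists (slope i j), 0|exists (- slope i j)%Z, (s * rad j)];
      rewrite ?opp_IZR; fold s; repeat split; try (intros; ring).
    + replace (0 - s * 0) with 0 by ring. apply HG.
    + replace (0 + s * (L - 0)) with (s * L) by ring. exact Hsl.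
    + replace (s * rad j - - s * (L - rad j)) with (s * L) by ring. exact Hsl.
    + replace (s * rad j + - s * (L - (L - rad j))) with 0 by ring. apply HG.
Qed.

(** * Pulling back Lagerberg forms along a star *)

Definition out_coef (G : wgraph) (p q : bool) (omega : nat -> R -> R) (v j : nat) : R -> R :=
  outf G p q omega v (star_edge G v j).

Lemma smooth_out_coef G p q omega v j : is_form G p q omega -> (j < valency G v)%nat ->
  smooth_fun (out_coef G p q omega v j).
Proof.
  intros [HS _] Hj. destruct (star_edge_spec G v j Hj) as [HE _]. unfold out_coef, outf.
  destruct (Nat.eqb (g_src G (star_edge G v j)) v); [apply HS; auto|].
  apply smooth_scal.
  apply smooth_ext with (fun y => omega (star_edge G v j) (-1 * y + g_len G (star_edge G v j))).
  - intros; f_equal; ring.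
  - apply smooth_comp_affine, HS; auto.
Qed.

(* The coefficient of [h^* eta] on branch [j] of the star, at distance [d] from the centre and
   for the outward orientation: there [h_i] has slope [slope i j] and value [slope i j * d]. *)
Definition star_coef (n : nat) (p q : bool) (g : nat -> nat -> (nat -> R) -> R)
  (slope : nat -> nat -> Z) (j : nat) (d : R) : R :=
  Rsum (map (fun i => Rsum (map (fun i' =>
     (if p then IZR (slope i j) else 1) * (if q then IZR (slope i' j) else 1) *
     g i i' (fun m => IZR (slope m j) * d)) (idx q n))) (idx p n)).

Lemma star_pullback G v rad slope n p q g omega : star_radii G v rad ->
  (forall j d, (j < valency G v)%nat -> 0 <= d <= rad j ->
     star_coef n p q g slope j d = out_coef G p q omega v j d) ->
  pullback_eq G (star_sub G v rad) n p q g (star_trop_map G v rad slope) omega.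
Proof.
  intros HD HP j y Hj Hy. simpl in Hj, Hy |- *. unfold pullback.
  set (s := out_sign G v j). set (d := star_dist G v rad j y).
  transitivity ((if p then s else 1) * (if q then s else 1) * star_coef n p q g slope j d).
  { unfold star_coef. rewrite <- Rsum_scal. apply Rsum_ext. intros i _. rewrite <- Rsum_scal.
    apply Rsum_ext. intros i' _. rewrite !Derive_star_trop_map. fold s.
    destruct p, q; unfold star_trop_map; fold d; ring. }
  rewrite HP; [|exact Hj|unfold d, star_dist; destruct (HD j Hj); destruct (outgoing G v j); lra].
  unfold out_coef, outf, s, out_sign, d, star_dist, star_off. fold (outgoing G v j).
  destruct (outgoing G v j).
  - rewrite Rplus_0_l. destruct p, q; ring.
  - replace (g_len G (star_edge G v j) - (rad j - y)) with (g_len G (star_edge G v j) - rad j + y) by ring.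
    unfold rev_sign. destruct p, q; simpl; ring.
Qed.

(** * The Lagerberg form at a boundary vertex *)

Definition slopes_id : nat -> nat -> Z := fun i j => if Nat.eqb i j then 1%Z else 0%Z.

Lemma star_coef_slopes_id k p q g j d : (j < k)%nat ->
  star_coef k p q g slopes_id j d =
  g (if p then j else 0%nat) (if q then j else 0%nat) (fun m => if Nat.eqb m j then d else 0).
Proof.
  intros Hj.
  assert (Hx : (fun m => IZR (slopes_id m j) * d) = fun m => if Nat.eqb m j then d else 0).
  { apply functional_extensionality; intros m. unfold slopes_id. destruct (Nat.eqb m j); simpl; ring. }
  assert (Hoff : forall m, m <> j -> IZR (slopes_id m j) = 0).
  { intros m Hm. unfold slopes_id. apply Nat.eqb_neq in Hm. rewrite Hm. reflexivity. }
  assert (Hon : IZR (slopes_id j j) = 1) by (unfold slopes_id; rewrite Nat.eqb_refl; reflexivity).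
  assert (Hsingle : forall f : nat -> R, (forall m, m <> j -> f m = 0) -> Rsum (map f (seq 0 k)) = f j).
  { intros f Hf. apply Rsum_seq_single; [lia|]. intros m _ Hm; apply Hf, Hm. }
  unfold star_coef. rewrite Hx. destruct p, q; simpl; rewrite ?Rplus_0_r.
  - rewrite Hsingle; [rewrite Hsingle|].
    + rewrite Hon; ring.
    + intros m Hm. rewrite (Hoff m Hm). ring.
    + intros m Hm. apply Rsum_zero. intros i' _. rewrite (Hoff m Hm). ring.
  - rewrite Hsingle; [rewrite Hon; ring|]. intros m Hm. rewrite (Hoff m Hm). ring.
  - rewrite Hsingle; [rewrite Hon; ring|]. intros m Hm. rewrite (Hoff m Hm). ring.
  - ring.
Qed.

Lemma eta_boundary_vertex G p q omega v : (v < g_nV G)%nat -> is_form G p q omega ->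
  exists g, lagerberg (valency G v) p q g /\
    forall j d, (j < valency G v)%nat ->
      star_coef (valency G v) p q g slopes_id j d = out_coef G p q omega v j d.
Proof.
  intros Hv HF. set (k := valency G v). set (o := out_coef G p q omega v).
  assert (Hsm : forall i, (i < k)%nat -> smooth_fun (o i)) by (intros; apply smooth_out_coef; auto).
  destruct (orb p q) eqn:Hpq.
  - set (i0 := fun i i' : nat => if p then i else i').
    exists (fun i i' => sep_fun k 0 [factor1 (i0 i i') (o (i0 i i'))]). split.
    + intros i i' Hi Hi'. apply smooth_Rn_sep_fun, smooth_factors_factor1, Hsm.
      unfold i0; destruct p, q; simpl in Hpq, Hi, Hi'; try discriminate;
        [apply in_seq in Hi|apply in_seq in Hi|apply in_seq in Hi']; lia.
    + intros j d Hj. rewrite star_coef_slopes_id by exact Hj.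
      unfold i0; destruct p, q; try discriminate; rewrite sep_fun_factor1, Nat.eqb_refl by exact Hj; ring.
  - destruct p, q; try discriminate.
    set (a := o 0%nat 0).
    assert (Hc : forall i, (i < k)%nat -> o i 0 = a).
    { intros i Hi. destruct HF as [_ HF]. destruct (HF v Hv) as [HC _].
      apply HC; [reflexivity| |]; apply star_edge_incident; unfold k in Hi; lia. }
    exists (fun _ _ => sep_fun k a (map (fun i => factor1 i (fun s => o i s - a)) (seq 0 k))). split.
    + intros i i' _ _. apply smooth_Rn_sep_fun, smooth_factors_factor1s.
      intros m Hm. apply in_seq in Hm. apply smooth_minus; [apply Hsm; lia|apply smooth_const].
    + intros j d Hj. rewrite star_coef_slopes_id by exact Hj.
      rewrite sep_fun_factor1s by (intros i Hi; apply in_seq in Hi; lia).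
      rewrite (Rsum_seq_single _ 0 k j); [rewrite Nat.eqb_refl; ring|lia|].
      intros m Hm Hmj. apply Nat.eqb_neq in Hmj. rewrite Hmj, Hc by lia. ring.
Qed.

(** * The Lagerberg form at a bivalent vertex *)

Definition glue (A B : R -> R) (u : R) : R := if Rlt_dec u 0 then B u else A u.

Lemma smooth_glue A B : smooth_fun A -> smooth_fun B ->
  (forall n, Derive_n A n 0 = Derive_n B n 0) -> smooth_fun (glue A B).
Proof.
  intros HA HB HAB.
  apply smooth_ext with (fun u => A u + cut_neg (fun u => B u - A u) u).
  - intros u. unfold glue, cut_neg. destruct (Rlt_dec u 0); ring.
  - apply smooth_plus; [exact HA|]. apply smooth_cut_neg; [apply smooth_minus; assumption|].
    intros n. rewrite Derive_n_minus_smooth, HAB by assumption. ring.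
Qed.

Lemma glue_nonneg A B u : 0 <= u -> glue A B u = A u.
Proof. intros Hu. unfold glue. destruct (Rlt_dec u 0); [lra|reflexivity]. Qed.

Lemma glue_nonpos A B u : A 0 = B 0 -> u <= 0 -> glue A B u = B u.
Proof.
  intros H0 Hu. unfold glue. destruct (Rlt_dec u 0); [reflexivity|]. replace u with 0 by lra. exact H0.
Qed.

(* In the valency-2 condition the coefficient of a (p,q)-form on a branch of weight [w] and
   orientation sign [s] enters multiplied by [bideg_factor p q w s]. *)
Definition bideg_factor (p q : bool) (w s : R) : R :=
  match p, q with true, true => w ^ 2 | false, false => 1 | _, _ => s * w end.

Lemma bivalent_taylor G p q omega v : (v < g_nV G)%nat -> is_form G p q omega -> ~ g_bnd G v ->
  valency G v = 2%nat -> forall n,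
  out_wt G v 0 ^ n * (bideg_factor p q (out_wt G v 0) 1 * Derive_n (out_coef G p q omega v 0) n 0) =
  (-1) ^ n * out_wt G v 1 ^ n * (bideg_factor p q (out_wt G v 1) (-1) * Derive_n (out_coef G p q omega v 1) n 0).
Proof.
  intros Hv [_ HF] Hnb Hk n. destruct (HF v Hv) as [_ Hint]. destruct (Hint Hnb) as [_ [H2 _]].
  assert (Hne : star_edge G v 0 <> star_edge G v 1) by (intros E; apply star_edge_inj in E; lia).
  specialize (H2 Hk (star_edge G v 0) (star_edge G v 1)
    (star_edge_incident G v 0 ltac:(lia)) (star_edge_incident G v 1 ltac:(lia)) Hne).
  unfold out_wt, out_coef, bideg_factor.
  destruct p, q; unfold val2_cond in H2; specialize (H2 n);
    rewrite ?Derive_n_opp, ?Derive_n_scal_l in H2; lra.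
Qed.

Lemma bivalent_flatness w0 w1 al be c1 c2 D0 D1 n : 0 < w0 -> 0 < w1 -> al <> 0 -> c1 * be = c2 * al ->
  w0 ^ n * (al * D0) = (-1) ^ n * w1 ^ n * (be * D1) ->
  c1 * (/ w1) ^ n * D0 = c2 * (- / w0) ^ n * D1.
Proof.
  intros H0 H1 Ha Hc E.
  replace (- / w0) with (-1 * / w0) by ring. rewrite Rpow_mult_distr, !pow_inv.
  pose proof (pow_lt _ n H0). pose proof (pow_lt _ n H1).
  set (s := (-1) ^ n) in *. set (P0 := w0 ^ n) in *. set (P1 := w1 ^ n) in *.
  assert (D0 = s * P1 * be * D1 / (P0 * al)) as ->.
  { apply Rmult_eq_reg_l with (P0 * al); [|apply Rmult_integral_contrapositive; split; lra].
    replace (P0 * al * D0) with (P0 * (al * D0)) by ring. rewrite E. field. split; lra. }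
  apply Rminus_diag_uniq.
  replace (c1 * / P1 * (s * P1 * be * D1 / (P0 * al)) - c2 * (s * / P0) * D1)
    with (s * D1 / (P0 * al) * (c1 * be - c2 * al)) by (field; split; lra).
  rewrite Hc. ring.
Qed.

Definition slopes_bivalent (G : wgraph) (v : nat) : nat -> nat -> Z := fun _ j =>
  if Nat.eqb j 0 then Z.of_nat (g_wt G (star_edge G v 1)) else (- Z.of_nat (g_wt G (star_edge G v 0)))%Z.

Lemma slopes_bivalent_0 G v i : IZR (slopes_bivalent G v i 0) = out_wt G v 1.
Proof. unfold slopes_bivalent, out_wt. simpl. rewrite INR_IZR_INZ. reflexivity. Qed.

Lemma slopes_bivalent_1 G v i : IZR (slopes_bivalent G v i 1) = - out_wt G v 0.
Proof. unfold slopes_bivalent, out_wt. simpl. rewrite opp_IZR, INR_IZR_INZ. reflexivity. Qed.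

Lemma slopes_bivalent_balanced G v : valency G v = 2%nat -> balanced_slopes G v (slopes_bivalent G v) 1.
Proof.
  intros Hk i _. unfold balanced. rewrite Hk. simpl. rewrite slopes_bivalent_0, slopes_bivalent_1. ring.
Qed.

Lemma eta_bivalent_vertex G p q omega v : wf_graph G -> (v < g_nV G)%nat -> is_form G p q omega ->
  ~ g_bnd G v -> valency G v = 2%nat ->
  exists g, lagerberg 1 p q g /\
    forall j d, (j < valency G v)%nat -> 0 <= d ->
      star_coef 1 p q g (slopes_bivalent G v) j d = out_coef G p q omega v j d.
Proof.
  intros HW Hv HF Hnb Hk.
  pose proof (smooth_out_coef G p q omega v 0 HF ltac:(lia)) as S0.
  pose proof (smooth_out_coef G p q omega v 1 HF ltac:(lia)) as S1.
  pose proof (out_wt_pos G v 0 HW ltac:(lia)) as W0. pose proof (out_wt_pos G v 1 HW ltac:(lia)) as W1.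
  pose proof (bivalent_taylor G p q omega v Hv HF Hnb Hk) as Htaylor.
  set (w0 := out_wt G v 0) in *. set (w1 := out_wt G v 1) in *.
  set (o0 := out_coef G p q omega v 0) in *. set (o1 := out_coef G p q omega v 1) in *.
  set (e := ((if p then 1 else 0) + (if q then 1 else 0))%nat).
  set (A := fun u => / w1 ^ e * o0 (/ w1 * u + 0)).
  set (B := fun u => / (- w0) ^ e * o1 (- / w0 * u + 0)).
  assert (HAB : forall n, Derive_n A n 0 = Derive_n B n 0).
  { intros n. unfold A, B. rewrite !Derive_n_scal_comp_affine, !Rmult_0_r, !Rplus_0_r by assumption.
    apply (bivalent_flatness w0 w1 (bideg_factor p q w0 1) (bideg_factor p q w1 (-1))); auto;
      unfold e, bideg_factor; destruct p, q; simpl; try (field; lra); apply Rgt_not_eq; nra. }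
  exists (fun _ _ => sep_fun 1 0 [factor1 0 (glue A B)]). split.
  - intros i i' _ _. apply smooth_Rn_sep_fun, smooth_factors_factor1, smooth_glue; [| |exact HAB];
      apply smooth_scal, smooth_comp_affine; assumption.
  - intros j d Hj Hd. rewrite Hk in Hj. unfold star_coef.
    replace (idx p 1) with [0%nat] by (destruct p; reflexivity).
    replace (idx q 1) with [0%nat] by (destruct q; reflexivity).
    simpl. rewrite sep_fun_factor1 by lia.
    destruct j as [|[|j]]; [| |lia].
    + rewrite slopes_bivalent_0. fold w1. rewrite glue_nonneg by nra. unfold A.
      replace (/ w1 * (w1 * d) + 0) with d by (field; lra).
      unfold e, o0; destruct p, q; simpl; field; lra.
    + rewrite slopes_bivalent_1. fold w0. rewrite glue_nonpos by (apply (HAB 0%nat) || nra). unfold B.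
      replace (- / w0 * (- w0 * d) + 0) with d by (field; lra).
      unfold e, o1; destruct p, q; simpl; field; lra.
Qed.

(** * The Lagerberg form at a vertex of valency at least three *)

Lemma out_coef_continuous G omega v i j : is_form G false false omega -> (v < g_nV G)%nat ->
  (i < valency G v)%nat -> (j < valency G v)%nat ->
  out_coef G false false omega v i 0 = out_coef G false false omega v j 0.
Proof.
  intros [_ HF] Hv Hi Hj. destruct (HF v Hv) as [HC _].
  apply HC; [reflexivity| |]; apply star_edge_incident; assumption.
Qed.

Lemma Rsum_incident (F : nat -> R) G v :
  Rsum (map F (incident G v)) = Rsum (map (fun j => F (star_edge G v j)) (seq 0 (valency G v))).
Proof. unfold star_edge, valency. rewrite (map_nth_seq F (incident G v) 0%nat). reflexivity. Qed.

Lemma branch_balancing G p q omega v : is_form G p q omega -> (v < g_nV G)%nat -> ~ g_bnd G v ->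
  (3 <= valency G v)%nat ->
  match p, q with
  | false, false =>
      Rsum (map (fun j => out_wt G v j * Derive (out_coef G p q omega v j) 0) (seq 0 (valency G v))) = 0
  | true, true => True
  | _, _ => Rsum (map (fun j => out_wt G v j * out_coef G p q omega v j 0) (seq 0 (valency G v))) = 0
  end.
Proof.
  intros [_ HF] Hv Hnb Hk. destruct (HF v Hv) as [_ Hint]. destruct (Hint Hnb) as [_ [_ H3]].
  specialize (H3 Hk). destruct p, q; auto; rewrite Rsum_incident in H3; exact H3.
Qed.

(* With [k - 1] coordinates, branch [j < k - 1] runs along the [j]-th axis with slope [w_(k-1)]
   and the last branch along [-(w_0, ..., w_(k-2))]. *)
Definition slopes_branch (G : wgraph) (v : nat) : nat -> nat -> Z := fun i j =>
  if Nat.eqb j (valency G v - 1) then (- Z.of_nat (g_wt G (star_edge G v i)))%Z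
  else if Nat.eqb i j then Z.of_nat (g_wt G (star_edge G v (valency G v - 1))) else 0%Z.

Lemma slopes_branch_last G v i : IZR (slopes_branch G v i (valency G v - 1)) = - out_wt G v i.
Proof. unfold slopes_branch. rewrite Nat.eqb_refl, opp_IZR, <- INR_IZR_INZ. reflexivity. Qed.

Lemma slopes_branch_lt G v i j : (j < valency G v - 1)%nat ->
  IZR (slopes_branch G v i j) = out_wt G v (valency G v - 1) * IZR (slopes_id i j).
Proof.
  intros Hj. unfold slopes_branch, slopes_id. destruct (Nat.eqb_spec j (valency G v - 1)); [lia|].
  destruct (Nat.eqb i j); simpl; [rewrite <- INR_IZR_INZ|]; unfold out_wt; ring.
Qed.

Lemma slopes_branch_balanced G v : balanced_slopes G v (slopes_branch G v) (valency G v - 1).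
Proof.
  intros i Hi. unfold balanced.
  replace (seq 0 (valency G v)) with (seq 0 (S (valency G v - 1))) by (f_equal; lia).
  rewrite Rsum_seq_S.
  rewrite (Rsum_seq_single _ 0 (valency G v - 1) i); [| lia |].
  - rewrite slopes_branch_lt, slopes_branch_last by lia. unfold slopes_id. rewrite Nat.eqb_refl. simpl. ring.
  - intros m Hm Hmi. rewrite slopes_branch_lt by lia. unfold slopes_id.
    destruct (Nat.eqb_spec i m); [lia|]. simpl. ring.
Qed.

Lemma star_coef_scale n p q g slope slope' j d c :
  (forall i, IZR (slope i j) = c * IZR (slope' i j)) ->
  star_coef n p q g slope j d =
  (if p then c else 1) * (if q then c else 1) * star_coef n p q g slope' j (c * d).
Proof.
  intros Hs. unfold star_coef. rewrite <- Rsum_scal. apply Rsum_ext. intros i _. rewrite <- Rsum_scal.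
  apply Rsum_ext. intros i' _.
  replace (fun m => IZR (slope m j) * d) with (fun m => IZR (slope' m j) * (c * d))
    by (apply functional_extensionality; intros; rewrite Hs; ring).
  rewrite !Hs. destruct p, q; ring.
Qed.

Lemma star_coef_slopes_branch_lt G v p q g j d : (j < valency G v - 1)%nat ->
  let W := out_wt G v (valency G v - 1) in
  star_coef (valency G v - 1) p q g (slopes_branch G v) j d =
  (if p then W else 1) * (if q then W else 1) *
  g (if p then j else 0%nat) (if q then j else 0%nat) (fun m => if Nat.eqb m j then W * d else 0).
Proof.
  intros Hj W. rewrite (star_coef_scale _ _ _ _ _ slopes_id j d W) by (intros; apply slopes_branch_lt, Hj).
  rewrite star_coef_slopes_id by exact Hj. reflexivity.
Qed.

(* What the diagonal part [a + sum_i (o_i (x_i / W) - a)] of [eta] misses on the last branch,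
   for a function [omega]. *)
Definition branch_error (G : wgraph) (omega : nat -> R -> R) (v : nat) (d : R) : R :=
  let N := (valency G v - 1)%nat in
  let o := out_coef G false false omega v in
  o N d - o 0%nat 0 -
  Rsum (map (fun i => o i (- out_wt G v i / out_wt G v N * d + 0) - o 0%nat 0) (seq 0 N)).

(* [branch_error] vanishes at 0 by continuity and its derivative by the balancing condition. *)
Lemma branch_error_flat G omega v : wf_graph G -> (v < g_nV G)%nat ->
  is_form G false false omega -> ~ g_bnd G v -> (3 <= valency G v)%nat ->
  smooth_fun (branch_error G omega v) /\ branch_error G omega v 0 = 0 /\
  Derive (branch_error G omega v) 0 = 0.
Proof.
  intros HWf Hv HF Hnb Hk.
  pose proof (branch_balancing G false false omega v HF Hv Hnb Hk) as Hder. simpl in Hder.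
  set (N := (valency G v - 1)%nat). set (o := out_coef G false false omega v) in *.
  assert (HkN : valency G v = S N) by (unfold N; lia).
  set (W := out_wt G v N). set (a := o 0%nat 0).
  assert (Hc : forall i, (i < valency G v)%nat -> o i 0 = a).
  { intros i Hi. apply out_coef_continuous; auto; lia. }
  assert (Hsm : forall i, (i < valency G v)%nat -> smooth_fun (o i)) by (intros; apply smooth_out_coef; auto).
  assert (HW : 0 < W) by (apply out_wt_pos; auto; lia).
  unfold branch_error. cbv zeta. fold N o W a. split; [|split].
  - apply smooth_minus; [apply smooth_minus; [apply Hsm; lia|apply smooth_const]|].
    apply (smooth_Rsum (fun i d => o i (- out_wt G v i / W * d + 0) - a)). intros i Hi. apply in_seq in Hi.
    apply smooth_minus; [apply smooth_comp_affine, Hsm; lia|apply smooth_const].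
  - rewrite Hc by lia. rewrite Rsum_zero; [ring|].
    intros i Hi. apply in_seq in Hi. rewrite Rmult_0_r, Rplus_0_r, Hc by lia. ring.
  - apply is_derive_unique. evar_last.
    + apply (is_derive_minus (fun d => o N d - a)).
      * apply (is_derive_minus (o N)); [apply is_derive_smooth, Hsm; lia|].
        apply (is_derive_const (K:=R_AbsRing) (V:=R_NormedModule)).
      * apply (is_derive_Rsum (fun i d => o i (- out_wt G v i / W * d + 0) - a)
                              (fun i _ => - out_wt G v i / W * Derive (o i) 0)).
        intros i Hi. apply in_seq in Hi. evar_last.
        -- apply (is_derive_minus (fun d => o i (- out_wt G v i / W * d + 0)));
             [|apply (is_derive_const (K:=R_AbsRing) (V:=R_NormedModule))].
           apply (is_derive_comp (o i) (fun d => - out_wt G v i / W * d + 0)); [|apply is_derive_affine].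
           rewrite Rmult_0_r, Rplus_0_r. apply is_derive_smooth, Hsm; lia.
        -- simpl. unfold minus, plus, opp, zero, scal; simpl; unfold mult; simpl. ring.
    + rewrite HkN, Rsum_seq_S in Hder. fold N W in Hder.
      rewrite (Rsum_ext _ (fun i => - / W * (out_wt G v i * Derive (o i) 0))) by (intros; unfold Rdiv; ring).
      rewrite Rsum_scal. simpl. unfold minus, plus, opp, zero; simpl.
      replace (Rsum (map (fun i => out_wt G v i * Derive (o i) 0) (seq 0 N))) with (- (W * Derive (o N) 0))
        by lra.
      field. lra.
Qed.

(* By Hadamard's lemma [branch_error d = d * rho d] with [rho 0 = 0], which becomes the cross
   term [chi(x_0) x_1] of [eta]. *)
Lemma branch_function_correction G omega v : wf_graph G -> (v < g_nV G)%nat ->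
  is_form G false false omega -> ~ g_bnd G v -> (3 <= valency G v)%nat ->
  exists chi, smooth_fun chi /\ chi 0 = 0 /\
    forall d, chi (- out_wt G v 0 * d) * (- out_wt G v 1 * d) = branch_error G omega v d.
Proof.
  intros HWf Hv HF Hnb Hk.
  destruct (branch_error_flat G omega v HWf Hv HF Hnb Hk) as [Sr [r0 Dr]].
  destruct (hadamard_division _ Sr r0) as [rho [Srho [Hrho rho0]]]. rewrite Dr in rho0.
  pose proof (out_wt_pos G v 0 HWf ltac:(lia)). pose proof (out_wt_pos G v 1 HWf ltac:(lia)).
  exists (fun s => - / out_wt G v 1 * rho (- / out_wt G v 0 * s + 0)). split; [|split].
  - apply smooth_scal, smooth_comp_affine, Srho.
  - rewrite Rmult_0_r, Rplus_0_r, rho0. ring.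
  - intros d. rewrite <- Hrho. replace (- / out_wt G v 0 * (- out_wt G v 0 * d) + 0) with d by (field; lra).
    field. lra.
Qed.

Lemma eta_branch_functions G omega v : wf_graph G -> (v < g_nV G)%nat -> is_form G false false omega ->
  ~ g_bnd G v -> (3 <= valency G v)%nat ->
  exists g, lagerberg (valency G v - 1) false false g /\
    forall j d, (j < valency G v)%nat ->
      star_coef (valency G v - 1) false false g (slopes_branch G v) j d = out_coef G false false omega v j d.
Proof.
  intros HWf Hv HF Hnb Hk.
  destruct (branch_function_correction G omega v HWf Hv HF Hnb Hk) as [chi [Schi [chi0 Hchi]]].
  set (N := (valency G v - 1)%nat) in *. set (W := out_wt G v N) in *.
  set (o := out_coef G false false omega v) in *. set (a := o 0%nat 0) in *.
  assert (Hc : forall i, (i < valency G v)%nat -> o i 0 = a).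
  { intros i Hi. apply out_coef_continuous; auto; lia. }
  assert (Hsm : forall i, (i < valency G v)%nat -> smooth_fun (o i)) by (intros; apply smooth_out_coef; auto).
  assert (HW : 0 < W) by (apply out_wt_pos; auto; unfold N; lia).
  set (g := sep_fun N a (map (fun i => factor1 i (fun s => o i (/ W * s + 0) - a)) (seq 0 N) ++
                         [factor2 0 1 chi (fun s => 1 * s + 0)])).
  assert (Vg : forall x, g x = a + Rsum (map (fun i => o i (/ W * x i + 0) - a) (seq 0 N)) + chi (x 0%nat) * x 1%nat).
  { intros x. unfold g. rewrite sep_fun_app, sep_fun_factor1s, sep_fun_factor2 by (intros; try apply in_seq in H; unfold N in *; lia).
    ring. }
  exists (fun _ _ => g). split.
  - intros _ _ _ _. apply smooth_Rn_sep_fun, smooth_factors_app.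
    + apply smooth_factors_factor1s. intros i Hi. apply in_seq in Hi.
      apply smooth_minus; [apply smooth_comp_affine, Hsm; unfold N in Hi; lia|apply smooth_const].
    + apply smooth_factors_factor2; [exact Schi|apply smooth_affine].
  - intros j d Hj. assert (j < N \/ j = N)%nat as [HjN| ->] by (unfold N; lia).
    + unfold N. rewrite star_coef_slopes_branch_lt by exact HjN. cbv zeta. fold N W. rewrite Vg.
      rewrite (Rsum_seq_single _ 0 N j); [|lia|].
      * rewrite Nat.eqb_refl. replace (/ W * (W * d) + 0) with d by (field; lra).
        destruct (Nat.eqb_spec 0 j) as [<-|]; simpl; [|rewrite chi0]; ring.
      * intros m Hm Hmj. apply Nat.eqb_neq in Hmj. rewrite Hmj, Rmult_0_r, Rplus_0_r, Hc by (unfold N in *; lia).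
        ring.
    + unfold star_coef. simpl. rewrite Vg. unfold N. rewrite !slopes_branch_last. fold N W.
      rewrite Hchi. unfold branch_error. cbv zeta. fold N W o a.
      rewrite (Rsum_ext _ (fun i => o i (- out_wt G v i / W * d + 0) - a));
        [ring|intros i _; rewrite slopes_branch_last; do 3 f_equal; field; lra].
Qed.

Lemma star_coef_mixed n p q (Gv : nat -> (nat -> R) -> R) slope j d : xorb p q = true ->
  star_coef n p q (fun i i' => Gv (if p then i else i')) slope j d =
  Rsum (map (fun i => IZR (slope i j) * Gv i (fun m => IZR (slope m j) * d)) (seq 0 n)).
Proof.
  intros Hx. unfold star_coef.
  destruct p, q; try discriminate; simpl; rewrite ?Rplus_0_r; apply Rsum_ext; intros; ring.
Qed.

(* For 1-forms the last branch is matched by adding [rho(x_1) dx_0]; [rho(0) = 0] is exactly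
   the balancing condition, and is needed because branch 0 passes through [x_1 = 0]. *)
Lemma branch_mixed_correction G p q omega v : wf_graph G -> (v < g_nV G)%nat -> is_form G p q omega ->
  ~ g_bnd G v -> (3 <= valency G v)%nat -> xorb p q = true ->
  let N := (valency G v - 1)%nat in
  let W := out_wt G v N in
  let o := out_coef G p q omega v in
  exists rho, smooth_fun rho /\ rho 0 = 0 /\ forall d,
    Rsum (map (fun i => - out_wt G v i * (/ W * o i (/ W * (- out_wt G v i * d) + 0))) (seq 0 N)) +
    - out_wt G v 0 * rho (- out_wt G v 1 * d) = o N d.
Proof.
  intros HWf Hv HF Hnb Hk Hx N W o.
  assert (Hs : Rsum (map (fun j => out_wt G v j * o j 0) (seq 0 (valency G v))) = 0).
  { pose proof (branch_balancing G p q omega v HF Hv Hnb Hk) as Hsum.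
    destruct p, q; try discriminate; exact Hsum. }
  assert (HkN : valency G v = S N) by (unfold N; lia).
  assert (Hsm : forall i, (i < valency G v)%nat -> smooth_fun (o i)) by (intros; apply smooth_out_coef; auto).
  assert (Hw : forall i, (i < valency G v)%nat -> 0 < out_wt G v i) by (intros; apply out_wt_pos; auto).
  assert (HW : 0 < W) by (apply Hw; lia).
  pose proof (Hw 0%nat ltac:(lia)). pose proof (Hw 1%nat ltac:(lia)).
  set (S := fun s => Rsum (map (fun i => out_wt G v i / W * o i (out_wt G v i / (out_wt G v 1 * W) * s + 0)) (seq 0 N))).
  exists (fun s => - / out_wt G v 0 * (o N (- / out_wt G v 1 * s + 0) + S s)). split; [|split].
  - apply smooth_scal, smooth_plus; [apply smooth_comp_affine, Hsm; lia|].
    apply (smooth_Rsum (fun i s => out_wt G v i / W * o i (out_wt G v i / (out_wt G v 1 * W) * s + 0))).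
    intros i Hi; apply in_seq in Hi. apply smooth_scal, smooth_comp_affine, Hsm; lia.
  - rewrite HkN, Rsum_seq_S in Hs. fold N W in Hs. unfold S.
    rewrite (Rsum_ext _ (fun i => / W * (out_wt G v i * o i 0)))
      by (intros; rewrite Rmult_0_r, Rplus_0_r; field; lra).
    rewrite Rsum_scal, Rmult_0_r, Rplus_0_r.
    replace (Rsum (map (fun i => out_wt G v i * o i 0) (seq 0 N))) with (- (W * o N 0)) by lra.
    field. split; lra.
  - intros d. unfold S. replace (- / out_wt G v 1 * (- out_wt G v 1 * d) + 0) with d by (field; lra).
    rewrite (Rsum_ext (fun i => out_wt G v i / W * o i (out_wt G v i / (out_wt G v 1 * W) * (- out_wt G v 1 * d) + 0))
                      (fun i => -1 * (- out_wt G v i * (/ W * o i (/ W * (- out_wt G v i * d) + 0))))).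
    + rewrite Rsum_scal. field. lra.
    + intros i _. replace (out_wt G v i / (out_wt G v 1 * W) * (- out_wt G v 1 * d) + 0)
        with (/ W * (- out_wt G v i * d) + 0) by (field; lra). field. lra.
Qed.

Lemma eta_branch_mixed G p q omega v : wf_graph G -> (v < g_nV G)%nat -> is_form G p q omega ->
  ~ g_bnd G v -> (3 <= valency G v)%nat -> xorb p q = true ->
  exists g, lagerberg (valency G v - 1) p q g /\
    forall j d, (j < valency G v)%nat ->
      star_coef (valency G v - 1) p q g (slopes_branch G v) j d = out_coef G p q omega v j d.
Proof.
  intros HWf Hv HF Hnb Hk Hx.
  destruct (branch_mixed_correction G p q omega v HWf Hv HF Hnb Hk Hx) as [rho [Srho [rho0 Hrho]]].
  set (N := (valency G v - 1)%nat) in *. set (W := out_wt G v N) in *.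
  set (o := out_coef G p q omega v) in *.
  assert (Hsm : forall i, (i < valency G v)%nat -> smooth_fun (o i)) by (intros; apply smooth_out_coef; auto).
  assert (HW : 0 < W) by (apply out_wt_pos; auto; unfold N; lia).
  set (Gv := fun i => sep_fun N 0 ([factor1 i (fun s => / W * o i (/ W * s + 0))] ++
                                   (if Nat.eqb i 0 then [factor1 1 rho] else []))).
  assert (VGv : forall i x, (i < N)%nat ->
    Gv i x = / W * o i (/ W * x i + 0) + (if Nat.eqb i 0 then rho (x 1%nat) else 0)).
  { intros i x Hi. unfold Gv. rewrite sep_fun_app, sep_fun_factor1 by lia.
    destruct (Nat.eqb i 0); [rewrite sep_fun_factor1 by (unfold N; lia)|rewrite sep_fun_nil]; ring. }
  exists (fun i i' => Gv (if p then i else i')). split.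
  - intros i i' Hi Hi'. apply smooth_Rn_sep_fun, smooth_factors_app.
    + apply smooth_factors_factor1, smooth_scal, smooth_comp_affine, Hsm.
      destruct p, q; try discriminate; simpl in Hi, Hi'; [apply in_seq in Hi|apply in_seq in Hi']; unfold N in *; lia.
    + destruct (Nat.eqb _ 0); [apply smooth_factors_factor1, Srho|constructor].
  - intros j d Hj. assert (j < N \/ j = N)%nat as [HjN| ->] by (unfold N; lia).
    + unfold N. rewrite star_coef_slopes_branch_lt by exact HjN. cbv zeta. fold N W.
      assert (Hj' : Gv j (fun m => if Nat.eqb m j then W * d else 0) = / W * o j d).
      { rewrite VGv by exact HjN. cbv beta. rewrite Nat.eqb_refl.
        replace (/ W * (W * d) + 0) with d by (field; lra).
        destruct (Nat.eqb_spec j 0) as [->|]; [simpl; rewrite rho0|]; ring. }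
      destruct p, q; try discriminate; simpl; rewrite Hj'; field; lra.
    + rewrite star_coef_mixed by exact Hx.
      rewrite (Rsum_ext _ (fun i => - out_wt G v i * (/ W * o i (/ W * (- out_wt G v i * d) + 0)) +
                                    (if Nat.eqb i 0 then - out_wt G v 0 * rho (- out_wt G v 1 * d) else 0))).
      * rewrite Rsum_plus, (Rsum_seq_single (fun i => if Nat.eqb i 0 then _ else 0) 0 N 0);
          [cbn [Nat.eqb]; apply Hrho|unfold N; lia|].
        intros m _ Hm. apply Nat.eqb_neq in Hm. rewrite Hm. reflexivity.
      * intros i Hi. apply in_seq in Hi. rewrite VGv by lia. unfold N. rewrite !slopes_branch_last.
        destruct (Nat.eqb_spec i 0) as [->|]; ring.
Qed.

Lemma Rsum_diag_corner N (a F : nat -> R) c : (1 < N)%nat ->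
  Rsum (map (fun i => Rsum (map (fun i' => a i * a i' *
    ((if Nat.eqb i i' then F i else 0) + (if andb (Nat.eqb i 0) (Nat.eqb i' 1) then c else 0)))
    (seq 0 N))) (seq 0 N))
  = Rsum (map (fun i => a i * a i * F i) (seq 0 N)) + a 0%nat * a 1%nat * c.
Proof.
  intros HN.
  rewrite (Rsum_ext _ (fun i => a i * a i * F i + (if Nat.eqb i 0 then a 0%nat * a 1%nat * c else 0))).
  - rewrite Rsum_plus. f_equal. rewrite (Rsum_seq_single _ 0 N 0); [reflexivity|lia|].
    intros m _ Hm. apply Nat.eqb_neq in Hm. rewrite Hm; reflexivity.
  - intros i Hi. apply in_seq in Hi.
    rewrite (Rsum_ext _ (fun i' => a i * a i' * (if Nat.eqb i i' then F i else 0) +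
                                   a i * a i' * (if andb (Nat.eqb i 0) (Nat.eqb i' 1) then c else 0)))
      by (intros; ring).
    rewrite Rsum_plus. f_equal.
    + rewrite (Rsum_seq_single _ 0 N i); [rewrite Nat.eqb_refl; reflexivity|lia|].
      intros m _ Hm. destruct (Nat.eqb_spec i m); [lia|]. ring.
    + destruct (Nat.eqb_spec i 0) as [->|].
      * rewrite (Rsum_seq_single _ 0 N 1); [reflexivity|lia|].
        intros m _ Hm. destruct (Nat.eqb_spec m 1); [lia|]. simpl. ring.
      * apply Rsum_zero. intros; simpl. ring.
Qed.

(* For (1,1)-forms the last branch is matched by adding [rho(x_0) d'x_0 d''x_1], which
   vanishes on the other branches; no condition at [v] is needed. *)
Lemma branch_top_correction G omega v : wf_graph G -> is_form G true true omega -> (3 <= valency G v)%nat ->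
  let N := (valency G v - 1)%nat in
  let W := out_wt G v N in
  let o := out_coef G true true omega v in
  exists rho, smooth_fun rho /\ forall d,
    Rsum (map (fun i => - out_wt G v i * - out_wt G v i * (/ (W * W) * o i (/ W * (- out_wt G v i * d) + 0)))
      (seq 0 N)) + - out_wt G v 0 * - out_wt G v 1 * rho (- out_wt G v 0 * d) = o N d.
Proof.
  intros HWf HF Hk N W o.
  assert (Hsm : forall i, (i < valency G v)%nat -> smooth_fun (o i)) by (intros; apply smooth_out_coef; auto).
  assert (Hw : forall i, (i < valency G v)%nat -> 0 < out_wt G v i) by (intros; apply out_wt_pos; auto).
  assert (HW : 0 < W) by (apply Hw; unfold N; lia).
  pose proof (Hw 0%nat ltac:(lia)). pose proof (Hw 1%nat ltac:(lia)).
  set (T := fun i s => out_wt G v i * out_wt G v i / (W * W) * o i (out_wt G v i / (out_wt G v 0 * W) * s + 0)).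
  exists (fun s => / (out_wt G v 0 * out_wt G v 1) *
                   (o N (- / out_wt G v 0 * s + 0) - Rsum (map (fun i => T i s) (seq 0 N)))). split.
  - apply smooth_scal, smooth_minus; [apply smooth_comp_affine, Hsm; unfold N; lia|].
    apply smooth_Rsum. intros i Hi; apply in_seq in Hi. apply smooth_scal, smooth_comp_affine, Hsm; unfold N in Hi; lia.
  - intros d. replace (- / out_wt G v 0 * (- out_wt G v 0 * d) + 0) with d by (field; lra).
    rewrite (Rsum_ext (fun i => T i (- out_wt G v 0 * d))
      (fun i => - out_wt G v i * - out_wt G v i * (/ (W * W) * o i (/ W * (- out_wt G v i * d) + 0)))).
    + field. lra.
    + intros i _. unfold T. replace (out_wt G v i / (out_wt G v 0 * W) * (- out_wt G v 0 * d) + 0)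
        with (/ W * (- out_wt G v i * d) + 0) by (field; lra). field. lra.
Qed.

Lemma eta_branch_top G omega v : wf_graph G -> is_form G true true omega -> (3 <= valency G v)%nat ->
  exists g, lagerberg (valency G v - 1) true true g /\
    forall j d, (j < valency G v)%nat ->
      star_coef (valency G v - 1) true true g (slopes_branch G v) j d = out_coef G true true omega v j d.
Proof.
  intros HWf HF Hk.
  destruct (branch_top_correction G omega v HWf HF Hk) as [rho [Srho Hrho]].
  set (N := (valency G v - 1)%nat) in *. set (W := out_wt G v N) in *.
  set (o := out_coef G true true omega v) in *.
  assert (Hsm : forall i, (i < valency G v)%nat -> smooth_fun (o i)) by (intros; apply smooth_out_coef; auto).
  assert (HW : 0 < W) by (apply out_wt_pos; auto; unfold N; lia).
  set (F := fun i s => / (W * W) * o i (/ W * s + 0)).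
  set (g := fun i i' => sep_fun N 0 ((if Nat.eqb i i' then [factor1 i (F i)] else []) ++
                                     (if andb (Nat.eqb i 0) (Nat.eqb i' 1) then [factor1 0 rho] else []))).
  assert (Vg : forall i i' x, (i < N)%nat -> g i i' x =
     (if Nat.eqb i i' then F i (x i) else 0) + (if andb (Nat.eqb i 0) (Nat.eqb i' 1) then rho (x 0%nat) else 0)).
  { intros i i' x Hi. unfold g. rewrite sep_fun_app.
    destruct (Nat.eqb i i'); [rewrite sep_fun_factor1 by lia|rewrite sep_fun_nil];
    (destruct (andb _ _); [rewrite sep_fun_factor1 by lia|rewrite sep_fun_nil]); ring. }
  exists g. split.
  - intros i i' Hi Hi'. apply in_seq in Hi. apply smooth_Rn_sep_fun, smooth_factors_app.
    + destruct (Nat.eqb i i'); [|constructor].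
      apply smooth_factors_factor1, smooth_scal, smooth_comp_affine, Hsm. unfold N in Hi; lia.
    + destruct (andb _ _); [apply smooth_factors_factor1, Srho|constructor].
  - intros j d Hj. assert (j < N \/ j = N)%nat as [HjN| ->] by (unfold N; lia).
    + unfold N. rewrite star_coef_slopes_branch_lt by exact HjN. cbv zeta. fold N W.
      rewrite Vg, Nat.eqb_refl by exact HjN. unfold F. cbv beta.
      replace (/ W * (W * d) + 0) with d by (field; lra).
      replace (andb (Nat.eqb j 0) (Nat.eqb j 1)) with false by (destruct (Nat.eqb_spec j 0); subst; reflexivity).
      field. lra.
    + unfold star_coef. simpl idx.
      rewrite (Rsum_ext _ (fun i => Rsum (map (fun i' => IZR (slopes_branch G v i N) * IZR (slopes_branch G v i' N) *
        ((if Nat.eqb i i' then F i (IZR (slopes_branch G v i N) * d) else 0) +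
         (if andb (Nat.eqb i 0) (Nat.eqb i' 1) then rho (IZR (slopes_branch G v 0 N) * d) else 0))) (seq 0 N)))).
      * rewrite Rsum_diag_corner by (unfold N; lia). rewrite <- Hrho. unfold N. rewrite !slopes_branch_last.
        f_equal. apply Rsum_ext. intros i _. rewrite slopes_branch_last. reflexivity.
      * intros i Hi. apply in_seq in Hi. apply Rsum_ext. intros i' _. rewrite Vg by lia. reflexivity.
Qed.

(** * Charts *)

Lemma exists_rational_radii G Gam v (bound : nat -> R) : wf_graph G -> subgroup Gam ->
  (forall e, (e < g_nE G)%nat -> Gam (g_len G e)) ->
  (forall j, (j < valency G v)%nat -> 0 < bound j) ->
  exists rad, star_radii G v rad /\ (forall j, (j < valency G v)%nat -> rad j <= bound j) /\
    (forall j, (j < valency G v)%nat -> Gbar Gam (star_end G v rad j)).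
Proof.
  intros HW HG HL HB.
  assert (Hex : forall j, exists r, (j < valency G v)%nat ->
    0 < r < g_len G (star_edge G v j) /\ r <= bound j /\ Gbar Gam (star_end G v (fun _ => r) j)).
  { intros j. destruct (lt_dec j (valency G v)) as [Hj|Hj]; [|exists 0; intros; lia].
    pose proof (star_edge_len_pos G v j HW Hj) as Hl. destruct (star_edge_spec G v j Hj) as [HE _].
    pose proof (HL _ HE) as HGl. set (len := g_len G (star_edge G v j)) in *.
    pose proof (HB j Hj). set (m := Rmin (bound j) len).
    assert (Hm : 0 < m) by (apply Rmin_pos; lra).
    assert (Hmb : m <= bound j) by apply Rmin_l. assert (Hml : m <= len) by apply Rmin_r.
    unfold star_end. destruct (outgoing G v j).
    - destruct (Gbar_dense Gam len HG HGl Hl 0 m Hm) as [y [Hy Hg]]. exists y. intros _. repeat split; auto; lra.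
    - destruct (Gbar_dense Gam len HG HGl Hl (len - m) len ltac:(lra)) as [y [Hy Hg]].
      exists (len - y). intros _. cbv beta. fold len. replace (len - (len - y)) with y by ring.
      repeat split; auto; lra. }
  destruct (choice _ Hex) as [rad Hrad]. exists rad.
  split; [|split]; intros j Hj; apply Hrad, Hj.
Qed.

Lemma star_good_chart G Gam v rad n slope : wf_graph G -> subgroup Gam ->
  (forall e, (e < g_nE G)%nat -> Gam (g_len G e)) -> (v < g_nV G)%nat -> star_radii G v rad ->
  (forall j, (j < valency G v)%nat -> Gbar Gam (star_end G v rad j)) ->
  (~ g_bnd G v -> balanced_slopes G v slope n) ->
  good_chart G Gam (PV v) (star_sub G v rad) n (star_trop_map G v rad slope).
Proof.
  intros HW HG HL Hv HD HR HB. split; [|split; [|split]].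
  - apply star_is_subgraph; auto.
  - apply star_nbhd; auto.
  - apply star_rational; auto.
  - apply star_trop; auto.
Qed.

Lemma vertex_chart_of_slopes G Gam p q v n slope : wf_graph G -> subgroup Gam ->
  (forall e, (e < g_nE G)%nat -> Gam (g_len G e)) -> (v < g_nV G)%nat ->
  (~ g_bnd G v -> balanced_slopes G v slope n) ->
  (forall omega, is_form G p q omega -> exists g, lagerberg n p q g /\
     forall j d, (j < valency G v)%nat -> 0 <= d -> star_coef n p q g slope j d = out_coef G p q omega v j d) ->
  exists U h, good_chart G Gam (PV v) U n h /\
    forall omega, is_form G p q omega -> exists eta, lagerberg n p q eta /\ pullback_eq G U n p q eta h omega.
Proof.
  intros HW HG HL Hv HB Heta.
  destruct (exists_rational_radii G Gam v (fun _ => 1) HW HG HL ltac:(intros; lra)) as [rad [HD [_ HR]]].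
  exists (star_sub G v rad), (star_trop_map G v rad slope). split; [apply star_good_chart; auto|].
  intros omega HF. destruct (Heta omega HF) as [g [Hg Hcoef]]. exists g. split; [exact Hg|].
  apply star_pullback; [exact HD|]. intros j d Hj Hd. apply Hcoef; [exact Hj|apply Hd].
Qed.

Lemma vertex_chart G Gam p q v : wf_graph G -> subgroup Gam ->
  (forall e, (e < g_nE G)%nat -> Gam (g_len G e)) -> (v < g_nV G)%nat -> ~ interior_leaf G (PV v) ->
  exists U n h, good_chart G Gam (PV v) U n h /\
    forall omega, is_form G p q omega -> exists eta, lagerberg n p q eta /\ pullback_eq G U n p q eta h omega.
Proof.
  intros HW HG HL Hv Hnl.
  assert (Hdim : forall n, (exists U h, good_chart G Gam (PV v) U n h /\ forall omega, is_form G p q omega ->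
      exists eta, lagerberg n p q eta /\ pullback_eq G U n p q eta h omega) ->
    exists U n h, good_chart G Gam (PV v) U n h /\ forall omega, is_form G p q omega ->
      exists eta, lagerberg n p q eta /\ pullback_eq G U n p q eta h omega).
  { intros n [U [h H]]. exists U, n, h. exact H. }
  destruct (classic (~ g_bnd G v /\ (1 <= valency G v)%nat)) as [[Hb Hk]|Hbk].
  - assert (valency G v = 2 \/ 3 <= valency G v)%nat as [Ek|Ek].
    { assert (valency G v <> 1%nat) by (intros E; apply Hnl; exists v; auto). lia. }
    + apply (Hdim 1%nat), (vertex_chart_of_slopes _ _ _ _ _ _ (slopes_bivalent G v)); auto.
      * intros _. apply slopes_bivalent_balanced, Ek.
      * intros omega HF. apply eta_bivalent_vertex; auto.
    + apply (Hdim (valency G v - 1)%nat), (vertex_chart_of_slopes _ _ _ _ _ _ (slopes_branch G v)); auto.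
      * intros _. apply slopes_branch_balanced.
      * intros omega HF.
        assert (exists g, lagerberg (valency G v - 1) p q g /\ forall j d, (j < valency G v)%nat ->
          star_coef (valency G v - 1) p q g (slopes_branch G v) j d = out_coef G p q omega v j d)
          as [g [Hg Hcoef]].
        { destruct p, q; [apply eta_branch_top|apply eta_branch_mixed|apply eta_branch_mixed|
                          apply eta_branch_functions]; auto. }
        exists g. split; auto.
  - apply (Hdim (valency G v)), (vertex_chart_of_slopes _ _ _ _ _ _ slopes_id); auto.
    + intros Hb i Hi. exfalso. apply Hbk. split; [exact Hb|lia].
    + intros omega HF. destruct (eta_boundary_vertex G p q omega v Hv HF) as [g [Hg Hcoef]].
      exists g. split; auto.
Qed.

Lemma leaf_chart G Gam p q v omega : wf_graph G -> subgroup Gam ->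
  (forall e, (e < g_nE G)%nat -> Gam (g_len G e)) -> (v < g_nV G)%nat -> ~ g_bnd G v ->
  valency G v = 1%nat -> is_form G p q omega ->
  exists U n h eta, good_chart G Gam (PV v) U n h /\ lagerberg n p q eta /\ pullback_eq G U n p q eta h omega.
Proof.
  intros HW HG HL Hv Hb Hk HF.
  destruct HF as [_ HFv]. destruct (HFv v Hv) as [_ Hint]. destruct (Hint Hb) as [H1 _].
  destruct (H1 Hk (star_edge G v 0) (star_edge_incident G v 0 ltac:(lia))) as [eps [Heps Hc]].
  destruct (exists_rational_radii G Gam v (fun _ => eps) HW HG HL ltac:(intros; lra)) as [rad [HD [Hle HR]]].
  set (c := if orb p q then 0 else out_coef G p q omega v 0 0).
  exists (star_sub G v rad), 0%nat, (star_trop_map G v rad slopes_id), (fun _ _ => sep_fun 0 c []).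
  split; [|split].
  - apply star_good_chart; auto. intros _ i Hi; lia.
  - intros i j _ _. apply smooth_Rn_sep_fun. constructor.
  - apply star_pullback; auto. intros j d Hj Hd. assert (j = 0%nat) as -> by lia.
    assert (Hdeps : rad 0%nat <= eps) by exact (Hle 0%nat ltac:(lia)).
    unfold out_coef. rewrite Hc by lra.
    unfold star_coef, c, out_coef. destruct p, q; simpl; rewrite ?sep_fun_nil; ring.
Qed.

Definition seg_graph (G : wgraph) (e : nat) (a b : R) (bnd : nat -> Prop) : wgraph := {|
  g_nV := 2; g_nE := 1; g_src := fun _ => 0%nat; g_tgt := fun _ => 1%nat;
  g_len := fun _ => b - a; g_wt := fun _ => g_wt G e; g_bnd := bnd |}.
Definition seg_with_bnd (G : wgraph) (e : nat) (a b : R) (bnd : nat -> Prop) : subgraph := {|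
  sg := seg_graph G e a b bnd; sg_par := fun _ => e; sg_off := fun _ => a;
  sg_vpt := fun u => if Nat.eqb u 0 then PE e a else PE e b |}.
Definition seg_sub (G : wgraph) (e : nat) (a b : R) : subgraph :=
  seg_with_bnd G e a b (fun u => sub_bnd G (seg_with_bnd G e a b (fun _ => False)) u).

Lemma in_seg_PE G e a b bnd e' y : a <= b ->
  in_sub G (seg_with_bnd G e a b bnd) (PE e' y) -> e' = e /\ a <= y <= b.
Proof.
  intros Hab [[u [Hu E]]|[e1 [z [He [Hz E]]]]].
  - simpl in E. destruct (Nat.eqb u 0); inversion E; subst; split; auto; lra.
  - simpl in *. symmetry in E. apply tpt_PE_inv in E. destruct E; subst. split; auto. lra.
Qed.

Lemma seg_not_nbhd_left G e a b bnd : (e < g_nE G)%nat -> 0 < a -> a < b -> b < g_len G e ->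
  ~ nbhd G (in_sub G (seg_with_bnd G e a b bnd)) (PE e a).
Proof.
  intros HE Ha Hab Hb [_ [eps [He H]]]. set (m := Rmin eps a / 2).
  assert (0 < m) by (unfold m; apply Rdiv_lt_0_compat; [apply Rmin_pos|]; lra).
  assert (m < eps) by (unfold m; pose proof (Rmin_l eps a); lra).
  assert (m < a) by (unfold m; pose proof (Rmin_r eps a); lra).
  specialize (H e (a - m) HE ltac:(lra) ltac:(simpl; split; auto; rewrite Rabs_left; lra)).
  rewrite tpt_int in H by lra. apply in_seg_PE in H; lra.
Qed.

Lemma seg_not_nbhd_right G e a b bnd : (e < g_nE G)%nat -> 0 < a -> a < b -> b < g_len G e ->
  ~ nbhd G (in_sub G (seg_with_bnd G e a b bnd)) (PE e b).
Proof.
  intros HE Ha Hab Hb [_ [eps [He H]]]. set (m := Rmin eps (g_len G e - b) / 2).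
  assert (0 < m) by (unfold m; apply Rdiv_lt_0_compat; [apply Rmin_pos|]; lra).
  assert (m < eps) by (unfold m; pose proof (Rmin_l eps (g_len G e - b)); lra).
  assert (m < g_len G e - b) by (unfold m; pose proof (Rmin_r eps (g_len G e - b)); lra).
  specialize (H e (b + m) HE ltac:(lra) ltac:(simpl; split; auto; rewrite Rabs_right; lra)).
  rewrite tpt_int in H by lra. apply in_seg_PE in H; lra.
Qed.

Lemma seg_nbhd G e a b bnd y0 : (e < g_nE G)%nat -> 0 < a -> a < y0 -> y0 < b -> b < g_len G e ->
  nbhd G (in_sub G (seg_with_bnd G e a b bnd)) (PE e y0).
Proof.
  intros HE Ha H1 H2 Hb. split.
  - right. exists 0%nat, (y0 - a). simpl. split; [lia|]. split; [lra|].
    replace (a + (y0 - a)) with y0 by ring. rewrite tpt_int; auto; lra.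
  - exists (Rmin (y0 - a) (b - y0)). split. apply Rmin_pos; lra.
    intros e' y He' Hy [E Hn]. subst e'. pose proof (Rmin_l (y0 - a) (b - y0)). pose proof (Rmin_r (y0 - a) (b - y0)).
    apply Rabs_def2 in Hn. right. exists 0%nat, (y - a). simpl. split; [lia|]. split; [lra|].
    replace (a + (y - a)) with y by ring. auto.
Qed.

Lemma seg_sub_bnd G e a b u : (e < g_nE G)%nat -> 0 < a < b -> b < g_len G e -> (u < 2)%nat ->
  sub_bnd G (seg_sub G e a b) u.
Proof.
  intros HE Hab Hb Hu. right. simpl. destruct (Nat.eqb u 0).
  - apply seg_not_nbhd_left; auto; lra.
  - apply seg_not_nbhd_right; auto; lra.
Qed.

Lemma seg_is_subgraph G e a b : wf_graph G -> (e < g_nE G)%nat -> 0 < a < b -> b < g_len G e ->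
  is_subgraph G (seg_sub G e a b).
Proof.
  intros HW HE Hab Hb. destruct (HW e HE) as [_ [_ [_ [Hl Hwt]]]].
  split; [|split; [|split; [|split; [|split; [|split]]]]].
  - intros j Hj. simpl. repeat split; try lia; lra.
  - intros u Hu. simpl. destruct (Nat.eqb u 0); simpl; repeat split; auto; lra.
  - intros u1 u2 H1 H2 E. simpl in *.
    destruct (Nat.eqb_spec u1 0), (Nat.eqb_spec u2 0); inversion E; try lia; lra.
  - intros j Hj. simpl. replace (a + (b - a)) with b by ring.
    rewrite !tpt_int by lra. repeat split; auto; lra.
  - intros e1 e2 H1 H2 Hne. simpl in *. lia.
  - intros u j Hu Hj y Hy. simpl in *. rewrite tpt_int by lra.
    destruct (Nat.eqb u 0); intros E; inversion E; lra.
  - intros u Hu. simpl. tauto.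
Qed.

Lemma seg_trop G Gam e a b : subgroup Gam -> Gam (g_len G e) ->
  (e < g_nE G)%nat -> 0 < a < b -> b < g_len G e ->
  ZGam_trop G Gam (seg_sub G e a b) 1 (fun _ _ y => 1 * y + a).
Proof.
  intros HG HGl HE Hab Hb i Hi. split; [split; [split|]|].
  - intros j _. apply smooth_affine.
  - intros u Hu. split.
    + intros _ e1 e2 H1 H2. apply incident_In in H1. apply incident_In in H2. simpl in H1, H2.
      replace e1 with 0%nat by lia. replace e2 with 0%nat by lia. reflexivity.
    + intros Hn. exfalso. apply Hn, seg_sub_bnd; auto.
  - intros j _. exists 1, a. reflexivity.
  - intros j _. exists 1%Z, a. simpl. split; [reflexivity|split].
    + replace (a - 1 * a) with 0 by ring. apply HG.
    + replace (a + 1 * (g_len G e - a)) with (g_len G e) by ring. exact HGl.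
Qed.

Lemma edge_chart G Gam p q e y0 : wf_graph G -> subgroup Gam ->
  (forall e, (e < g_nE G)%nat -> Gam (g_len G e)) -> (e < g_nE G)%nat -> 0 < y0 < g_len G e ->
  exists U n h, good_chart G Gam (PE e y0) U n h /\
    forall omega, is_form G p q omega -> exists eta, lagerberg n p q eta /\ pullback_eq G U n p q eta h omega.
Proof.
  intros HW HG HL HE Hy0.
  pose proof (HL e HE) as HGl. destruct (HW e HE) as [_ [_ [_ [Hl _]]]].
  destruct (Gbar_dense Gam _ HG HGl Hl 0 y0 ltac:(lra)) as [a [Ha HGa]].
  destruct (Gbar_dense Gam _ HG HGl Hl y0 (g_len G e) ltac:(lra)) as [b [Hb HGb]].
  exists (seg_sub G e a b), 1%nat, (fun _ _ y => 1 * y + a). split; [split; [|split; [|split]]|].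
  - apply seg_is_subgraph; auto; lra.
  - apply seg_nbhd; auto; lra.
  - intros u Hu. right. exists e. simpl. destruct (Nat.eqb u 0); [exists a|exists b];
      rewrite tpt_int by lra; repeat split; auto; lra.
  - apply seg_trop; auto; lra.
  - intros omega [HS _]. exists (fun _ _ => sep_fun 1 0 [factor1 0 (omega e)]). split.
    + intros i j _ _. apply smooth_Rn_sep_fun, smooth_factors_factor1, HS, HE.
    + intros j y Hj Hy. simpl in Hj |- *. unfold pullback.
      replace (idx p 1) with [0%nat] by (destruct p; reflexivity).
      replace (idx q 1) with [0%nat] by (destruct q; reflexivity).
      simpl. rewrite sep_fun_factor1 by lia.
      replace (Derive (fun y => 1 * y + a) y) with 1 by (symmetry; apply is_derive_unique, is_derive_affine).
      replace (1 * y + a) with (a + y) by ring. destruct p, q; ring.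
Qed.

Theorem proposition4p10 :
  forall (G : wgraph) (Gam : R -> Prop) (p q : bool) (x : point),
    wf_graph G ->
    subgroup Gam ->
    (forall e, (e < g_nE G)%nat -> Gam (g_len G e)) ->
    valid_pt G x ->
    (forall omega : nat -> R -> R, is_form G p q omega ->
       exists (U : subgraph) (n : nat) (h : nat -> nat -> R -> R)
              (eta : nat -> nat -> (nat -> R) -> R),
         good_chart G Gam x U n h /\ lagerberg n p q eta /\
         pullback_eq G U n p q eta h omega) /\
    (~ interior_leaf G x ->
       exists (U : subgraph) (n : nat) (h : nat -> nat -> R -> R),
         good_chart G Gam x U n h /\
         forall omega : nat -> R -> R, is_form G p q omega ->
           exists eta : nat -> nat -> (nat -> R) -> R,
             lagerberg n p q eta /\ pullback_eq G U n p q eta h omega).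
Proof.
  intros G Gam p q x HW HG HL Hx.
  assert (Huniform : ~ interior_leaf G x -> exists U n h, good_chart G Gam x U n h /\
    forall omega, is_form G p q omega -> exists eta, lagerberg n p q eta /\ pullback_eq G U n p q eta h omega).
  { intros Hnl. destruct x as [v|e y].
    - apply vertex_chart; auto.
    - destruct Hx as [HE Hy]. apply edge_chart; auto. }
  split; [|exact Huniform].
  intros omega HF. destruct (classic (interior_leaf G x)) as [[v [-> [Hb Hk]]]|Hnl].
  - apply leaf_chart; auto.
  - destruct (Huniform Hnl) as [U [n [h [Hchart Heta]]]]. destruct (Heta omega HF) as [eta [H1 H2]].
    exists U, n, h, eta. auto.
Qed.
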